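(* Assume $\dim\mathcal{X}\ge2$, and let $L_0\in\mathcal{B}(\mathcal{X})$ have $\lambda_0=1$ as a simple isolated eigenvalue, with $\|L_0\|=1$ and $\|L_0x\|\le(1-\delta_0)\|x\|$ for all $x$ in the stable complement $G_0$, where $\delta_0\in(0,1)$. Let $\tau_0=\tau_{L_0}$ and $\pi_0=\pi_{L_0}$. Then for every $\delta\in(0,\delta_0)$, every $L\in\mathcal{B}(\mathcal{X})$ with \[\|L-L_0\|\le\frac{\delta_0(\delta_0-\delta)}{6(1+\delta_0-\delta)\tau_0\|\pi_0\|}\] has a spectral gap of size $\delta$ with constant $1$ below its eigenvalue $\lambda_L$ (the analytic continuation of $\lambda_0$). In particular, every $L$ with $\|L-L_0\|<\frac{\delta_0^2}{6(1+\delta_0)\tau_0\|\pi_0\|}$ has a spectral gap of some size $\delta>0$ with constant $1$ below $\lambda_L$.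
   Context: $\mathcal{X}$ is a real or complex Banach space, $\mathcal{B}(\mathcal{X})$ its bounded operators. An operator $L$ has $\lambda$ as a simple isolated eigenvalue if there are a nonzero $u$ with $Lu=\lambda u$ and a closed $L$-invariant complement $G$ of $\langle u\rangle$ (the stable complement) on which $L-\lambda$ is invertible with bounded inverse; the eigenform $\phi$ satisfies $\phi\circ L=\lambda\phi$, $\ker\phi=G$, $\phi(u)=1$. $P_L=\phi(\cdot)u$, $\pi_L=\mathrm{Id}-P_L$, $\tau_L=\|P_L\|$. A spectral gap of size $\delta\in(0,1)$ with constant $C\ge1$ below $\lambda$ means $\|L^nx\|\le C|\lambda|^n(1-\delta)^n\|x\|$ for all $x\in G$, $n\in\mathbb{N}$. *)

From Stdlib Require Import Reals Lra.
Open Scope R_scope.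
Set Implicit Arguments.

Record Scalars := mkScalars {
  sc_car :> Type;
  sc0 : sc_car;
  sc1 : sc_car;
  scadd : sc_car -> sc_car -> sc_car;
  scmul : sc_car -> sc_car -> sc_car;
  scopp : sc_car -> sc_car;
  scabs : sc_car -> R }.

Definition RScalars : Scalars := @mkScalars R 0 1 Rplus Rmult Ropp Rabs.

Definition Cx : Type := (R * R)%type.
Definition Cadd (z w : Cx) : Cx := (fst z + fst w, snd z + snd w).
Definition Cmul (z w : Cx) : Cx :=
  (fst z * fst w - snd z * snd w, fst z * snd w + snd z * fst w).
Definition Copp (z : Cx) : Cx := (- fst z, - snd z).
Definition Cabs (z : Cx) : R := sqrt (fst z ^ 2 + snd z ^ 2).
Definition CScalars : Scalars := @mkScalars Cx (0, 0) (1, 0) Cadd Cmul Copp Cabs.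

Inductive ScalarField := RealField | ComplexField.
Definition scalars_of (f : ScalarField) : Scalars :=
  match f with RealField => RScalars | ComplexField => CScalars end.

Record Banach (S : Scalars) := mkBanach {
  bcar :> Type;
  bzero : bcar;
  badd : bcar -> bcar -> bcar;
  bopp : bcar -> bcar;
  bscal : sc_car S -> bcar -> bcar;
  bnorm : bcar -> R;
  badd_assoc : forall x y z, badd x (badd y z) = badd (badd x y) z;
  badd_comm : forall x y, badd x y = badd y x;
  badd_0 : forall x, badd x bzero = x;
  badd_opp : forall x, badd x (bopp x) = bzero;
  bscal_1 : forall x, bscal (sc1 S) x = x;
  bscal_mul : forall a b x, bscal (scmul S a b) x = bscal a (bscal b x);
  bscal_addl : forall a b x, bscal (scadd S a b) x = badd (bscal a x) (bscal b x);
  bscal_addr : forall a x y, bscal a (badd x y) = badd (bscal a x) (bscal a y);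
  bnorm_nonneg : forall x, 0 <= bnorm x;
  bnorm_eq0 : forall x, bnorm x = 0 -> x = bzero;
  bnorm_scal : forall a x, bnorm (bscal a x) = scabs S a * bnorm x;
  bnorm_tri : forall x y, bnorm (badd x y) <= bnorm x + bnorm y;
  bcomplete : forall s : nat -> bcar,
    (forall eps, 0 < eps -> exists N, forall m n, (N <= m)%nat -> (N <= n)%nat ->
        bnorm (badd (s m) (bopp (s n))) < eps) ->
    exists l, Un_cv (fun n => bnorm (badd (s n) (bopp l))) 0 }.

Arguments bzero {S} b0.
Arguments badd {S b0}.
Arguments bopp {S b0}.
Arguments bscal {S b0}.
Arguments bnorm {S b0}.

Definition bsub {S : Scalars} {X : Banach S} (x y : X) : X := badd x (bopp y).

Definition is_linear {S : Scalars} {X : Banach S} (L : X -> X) : Prop :=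
  forall (a : sc_car S) (x y : X), L (badd (bscal a x) y) = badd (bscal a (L x)) (L y).

Definition is_bounded {S : Scalars} {X : Banach S} (L : X -> X) : Prop :=
  is_linear L /\ exists M, forall x, bnorm (L x) <= M * bnorm x.

Definition is_opnorm {S : Scalars} {X : Banach S} (L : X -> X) (c : R) : Prop :=
  is_lub (fun r => exists x : X, bnorm x <= 1 /\ r = bnorm (L x)) c.

Definition op_sub {S : Scalars} {X : Banach S} (L M : X -> X) : X -> X :=
  fun x => bsub (L x) (M x).

Definition op_pow {S : Scalars} {X : Banach S} (n : nat) (L : X -> X) : X -> X :=
  Nat.iter n L.

Definition closed_subspace {S : Scalars} {X : Banach S} (G : X -> Prop) : Prop :=
  G (bzero X) /\
  (forall a x y, G x -> G y -> G (badd (bscal a x) y)) /\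
  (forall (s : nat -> X) (l : X), (forall n, G (s n)) ->
      Un_cv (fun n => bnorm (bsub (s n) l)) 0 -> G l).

Definition line_complement {S : Scalars} {X : Banach S} (u : X) (G : X -> Prop) : Prop :=
  closed_subspace G /\
  (forall x : X, exists (a : sc_car S) (g : X), G g /\ x = badd (bscal a u) g) /\
  (forall a : sc_car S, G (bscal a u) -> bscal a u = bzero X).

Definition invariant {S : Scalars} {X : Banach S} (L : X -> X) (G : X -> Prop) : Prop :=
  forall x, G x -> G (L x).

Definition simple_isolated_eigen {S : Scalars} {X : Banach S}
  (L : X -> X) (lam : sc_car S) (u : X) (G : X -> Prop) : Prop :=
  u <> bzero X /\ L u = bscal lam u /\
  line_complement u G /\ invariant L G /\
  exists Rinv : X -> X,
    (forall g, G g -> G (Rinv g)) /\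
    (forall g, G g -> Rinv (bsub (L g) (bscal lam g)) = g /\
                      bsub (L (Rinv g)) (bscal lam (Rinv g)) = g) /\
    (exists M, forall g, G g -> bnorm (Rinv g) <= M * bnorm g).

Definition eigenform {S : Scalars} {X : Banach S}
  (L : X -> X) (lam : sc_car S) (u : X) (G : X -> Prop) (phi : X -> sc_car S) : Prop :=
  (forall a x y, phi (badd (bscal a x) y) = scadd S (scmul S a (phi x)) (phi y)) /\
  (forall x, phi (L x) = scmul S lam (phi x)) /\
  (forall x, phi x = sc0 S <-> G x) /\
  phi u = sc1 S.

Definition eig_proj {S : Scalars} {X : Banach S} (phi : X -> sc_car S) (u : X) : X -> X :=
  fun x => bscal (phi x) u.

Definition eig_coproj {S : Scalars} {X : Banach S} (phi : X -> sc_car S) (u : X) : X -> X :=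
  fun x => bsub x (eig_proj phi u x).

Definition spectral_gap {S : Scalars} {X : Banach S}
  (L : X -> X) (lam : sc_car S) (G : X -> Prop) (delta C : R) : Prop :=
  forall (x : X) (n : nat), G x ->
    bnorm (op_pow n L x) <= C * (scabs S lam) ^ n * (1 - delta) ^ n * bnorm x.

From Stdlib Require Import Reals Lra Lia Psatz ClassicalEpsilon Classical.
From Coquelicot Require Complex.
Open Scope R_scope.

(* Write a = delta0, dl = delta, nu = |u0|, and let e bound c = |L - L0| as well as tau0 c and
   |pi0| c (possible with e = tau0 |pi0| c since tau0, |pi0| >= 1).  The eigenvector of L is
   u = u0 + h with h in G0 a fixed point of h |-> pi0 L (u0 + h) / phi0 (L (u0 + h)); on the
   ball |h| <= K nu of G0 this map is a contraction of rate r = (1 - a + e (1 + K)) / ell, where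
   ell = 1 - e (1 + K) bounds the eigenvalue lam = phi0 (L u) from below.  With Lhat = L / lam
   and rho = pi_u the projection onto G0 along u, the map rho o Lhat contracts G0 with the
   same rate r, so Lhat^n x converges geometrically to a multiple of u for every x.  The stable
   complement is G = {x | Lhat^n x -> 0}; it is a closed invariant complement of <u>, and on it
   |phi0 x| |lam| |u| <= s |rho x| with s = e (1 + K) / (1 - r).  Splitting x = rho x + phi0 x u
   then gives |L x| <= (1 - a + e + s) |rho x| <= (1 - dl) |lam| |x|, provided
   s + 1 - a + e <= (1 - dl) (ell - s); the choices e = a (a - dl) / (6 (1 + a - dl)) and
   K = 2 e / a make all these conditions hold.  The resolvent of L on G comes from the same
   contraction estimate. *)

Lemma Rdiv_le_0_compat (a b : R) : 0 <= a -> 0 < b -> 0 <= a / b.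
Proof. intros Ha Hb. apply Rmult_le_pos; [exact Ha | left; apply Rinv_0_lt_compat; exact Hb]. Qed.

Definition lam_floor (e K : R) := 1 - e * (1 + K).
Definition contr_rate (a e K : R) := (1 - a + e * (1 + K)) / lam_floor e K.
Definition phi_slack (a e K : R) := e * (1 + K) / (1 - contr_rate a e K).
Definition budget (a dl : R) := a * (a - dl) / (6 * (1 + (a - dl))).

(* The last condition of budget_constants cleared of denominators, with w = e (1 + K). *)
Lemma budget_ineq a t e w : 0 < t < a -> a < 1 -> e * (6 * (1 + t)) = a * t ->
  0 <= e -> e <= w -> w <= 7/6 * e ->
  e * (a - 2 * w) + w * (2 - a^2 - w * (4 - 3 * a)) <= t * (1 - w) * (a - 3 * w).
Proof.
  intros Ht Ha He He0 Hw1 Hw2.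
  assert (A1 : e * (a - 2 * w) + w * (2 - a^2 - w * (4 - 3 * a)) <= e * a + w * (2 - a^2)).
  { assert (0 <= e * w) by nra.
    assert (0 <= w * w * (4 - 3 * a)) by (apply Rmult_le_pos; nra). nra. }
  assert (A2 : t * a - t * w * (3 + a) <= t * (1 - w) * (a - 3 * w)).
  { assert (0 <= t * w * w) by (apply Rmult_le_pos; nra). nra. }
  assert (A3 : e * a + w * (2 - a^2) + t * w * (3 + a)
               <= e * (a + 7/6 * (2 - a^2) + 7/6 * t * (3 + a))).
  { assert (0 <= 2 - a^2) by nra. assert (0 <= t * (3 + a)) by nra.
    assert (w * (2 - a^2) <= 7/6 * e * (2 - a^2)) by (apply Rmult_le_compat_r; lra).
    assert (w * (t * (3 + a)) <= 7/6 * e * (t * (3 + a))) by (apply Rmult_le_compat_r; lra).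
    nra. }
  assert (A4 : e * (a + 7/6 * (2 - a^2) + 7/6 * t * (3 + a)) <= t * a).
  { assert (a + 7/6 * (2 - a^2) + 7/6 * t * (3 + a) <= 6 * (1 + t)) by nra.
    apply Rle_trans with (e * (6 * (1 + t))); [apply Rmult_le_compat_l; lra | lra]. }
  lra.
Qed.

Lemma budget_constants a dl : 0 < dl < a -> a < 1 ->
  let e := budget a dl in let K := 2 * e / a in
  0 <= e /\ 0 <= K /\ 0 < lam_floor e K /\ e + (1 - a + e) * K <= K * lam_floor e K /\
  contr_rate a e K < 1 /\
  phi_slack a e K + 1 - a + e <= (1 - dl) * (lam_floor e K - phi_slack a e K).
Proof.
  intros Hd Ha e K.
  set (t := a - dl) in *.
  assert (Ht : 0 < t < a) by (unfold t; lra).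
  assert (He : e * (6 * (1 + t)) = a * t) by (unfold e, budget; fold t; field; lra).
  assert (He0 : 0 < e) by (unfold e, budget; fold t; apply Rdiv_lt_0_compat; nra).
  assert (HK : K * (3 * (1 + t)) = t) by (unfold K; field_simplify_eq; lra).
  assert (HK0 : 0 < K) by (unfold K; apply Rdiv_lt_0_compat; lra).
  unfold phi_slack, contr_rate, lam_floor.
  set (w := e * (1 + K)).
  assert (Hw1 : e <= w) by (unfold w; nra).
  assert (Hw2 : w <= 7/6 * e) by (unfold w; nra).
  assert (Hw3 : 3 * w < a) by nra.
  assert (Hr : 1 - (1 - a + w) / (1 - w) = (a - 2 * w) / (1 - w)) by (field; lra).
  rewrite Hr.
  replace (w / ((a - 2 * w) / (1 - w))) with (w * (1 - w) / (a - 2 * w)) by (field; lra).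
  repeat split; try lra.
  - assert (e * 2 = a * K) by (unfold K; field; lra). unfold w. nra.
  - enough (0 < (a - 2 * w) / (1 - w)) by lra. apply Rdiv_lt_0_compat; lra.
  - pose proof (budget_ineq a t e w Ht Ha He ltac:(lra) Hw1 Hw2).
    replace (1 - dl) with (1 - a + t) by (unfold t; ring).
    apply (Rmult_le_reg_r (a - 2 * w)); [lra|].
    replace ((w * (1 - w) / (a - 2 * w) + 1 - a + e) * (a - 2 * w))
      with (w * (1 - w) + (1 - a + e) * (a - 2 * w)) by (field; lra).
    replace ((1 - a + t) * (1 - w - w * (1 - w) / (a - 2 * w)) * (a - 2 * w))
      with ((1 - a + t) * (1 - w) * (a - 3 * w)) by (field; lra).
    nra.
Qed.

Lemma exists_gap_size a m : 0 < a -> 0 <= m -> m * (1 + a) < a ^ 2 ->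
  exists t, 0 < t < a /\ m * (1 + t) <= a * t.
Proof.
  intros Ha Hm Hma.
  assert (Ham : 0 < a - m) by nra.
  assert (Hq0 : 0 <= m / (a - m)) by (apply Rdiv_le_0_compat; lra).
  assert (Hqa : m / (a - m) < a).
  { apply (Rmult_lt_reg_r (a - m)); [lra|].
    replace (m / (a - m) * (a - m)) with m by (field; lra). nra. }
  exists ((m / (a - m) + a) / 2). split; [lra|].
  assert (m <= (m / (a - m) + a) / 2 * (a - m)).
  { apply Rle_trans with (m / (a - m) * (a - m)); [right; field; lra|].
    apply Rmult_le_compat_r; lra. }
  nra.
Qed.

Lemma budget_spec a dl x : 0 < dl < a -> 6 * x * (1 + (a - dl)) <= a * (a - dl) -> x <= budget a dl.
Proof.
  intros Hdl Hx. unfold budget. apply (Rmult_le_reg_r (6 * (1 + (a - dl)))); [lra|].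
  replace (a * (a - dl) / (6 * (1 + (a - dl))) * (6 * (1 + (a - dl)))) with (a * (a - dl))
    by (field; lra).
  lra.
Qed.

(** * Vector algebra over a valued field *)

Section ValuedField.

Variable S : Scalars.
Variable sinv : S -> S.
Hypothesis S_field : field_theory (sc0 S) (sc1 S) (scadd S) (scmul S)
  (fun a b => scadd S a (scopp S b)) (scopp S) (fun a b => scmul S a (sinv b)) sinv eq.
Add Field S_field_tac : S_field.

Local Notation sadd := (scadd S).
Local Notation smul := (scmul S).
Local Notation sopp := (scopp S).
Local Notation s0 := (sc0 S).
Local Notation s1 := (sc1 S).
Local Notation sabs := (scabs S).

Hypothesis sabs_mul : forall a b, sabs (smul a b) = sabs a * sabs b.
Hypothesis sabs_triangle : forall a b, sabs (sadd a b) <= sabs a + sabs b.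
Hypothesis sabs_opp : forall a, sabs (sopp a) = sabs a.
Hypothesis sabs_0 : sabs s0 = 0.
Hypothesis sabs_1 : sabs s1 = 1.
Hypothesis sabs_eq0 : forall a, sabs a = 0 -> a = s0.
Hypothesis sabs_nonneg : forall a, 0 <= sabs a.
Hypothesis sabs_onto : forall r, 0 <= r -> exists k, sabs k = r.

Lemma s1_neq_s0 : s1 <> s0.
Proof. exact (F_1_neq_0 S_field). Qed.

Lemma sinv_r a : a <> s0 -> smul a (sinv a) = s1.
Proof. intros H. field. exact H. Qed.

Lemma sabs_pos a : a <> s0 -> 0 < sabs a.
Proof.
  intros H. destruct (sabs_nonneg a) as [Hlt | Heq]; [exact Hlt|].
  exfalso. apply H, sabs_eq0. symmetry. exact Heq.
Qed.

Lemma sabs_inv a : a <> s0 -> sabs (sinv a) = / sabs a.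
Proof.
  intros H. pose proof (sabs_pos a H).
  assert (sabs a * sabs (sinv a) = 1) by (rewrite <- sabs_mul, sinv_r; auto).
  field_simplify_eq; lra.
Qed.

Lemma sabs_rev_triangle a b : sabs a - sabs b <= sabs (sadd a b).
Proof.
  pose proof (sabs_triangle (sadd a b) (sopp b)) as H. rewrite sabs_opp in H.
  replace (sadd (sadd a b) (sopp b)) with a in H by ring. lra.
Qed.

Variable X : Banach S.
Local Notation "x +v y" := (badd x y) (at level 50, left associativity).
Local Notation "a *v x" := (bscal a x) (at level 40, no associativity).
Local Notation "x -v y" := (bsub x y) (at level 50, left associativity).
Local Notation "0v" := (bzero X).
Local Notation nrm := bnorm.

Implicit Types x y z w : X.

Lemma vadd_0_l x : 0v +v x = x.
Proof. rewrite badd_comm. apply badd_0. Qed.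

Lemma vadd_cancel_l x y z : x +v y = x +v z -> y = z.
Proof.
  intros H. rewrite <- (vadd_0_l y), <- (vadd_0_l z), <- (badd_opp _ x), (badd_comm _ x).
  rewrite <- !badd_assoc, H. reflexivity.
Qed.

Lemma vscal_0_l x : s0 *v x = 0v.
Proof. apply (vadd_cancel_l (s0 *v x)). rewrite <- bscal_addl, badd_0. f_equal. ring. Qed.

Lemma vscal_0_r a : a *v 0v = 0v.
Proof. apply (vadd_cancel_l (a *v 0v)). rewrite <- bscal_addr, !badd_0. reflexivity. Qed.

Lemma vopp_scal x : bopp x = sopp s1 *v x.
Proof.
  apply (vadd_cancel_l x). rewrite badd_opp. rewrite <- (bscal_1 _ x) at 1.
  rewrite <- bscal_addl. replace (sadd s1 (sopp s1)) with s0 by ring.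
  rewrite vscal_0_l. reflexivity.
Qed.

Lemma vsub_scal x y : x -v y = x +v sopp s1 *v y.
Proof. unfold bsub. rewrite vopp_scal. reflexivity. Qed.

Lemma vscal_opp a x : a *v bopp x = sopp a *v x.
Proof. rewrite vopp_scal, <- bscal_mul. f_equal. ring. Qed.

Lemma vsub_diag x : x -v x = 0v.
Proof. apply badd_opp. Qed.

Lemma vsub_0_r x : x -v 0v = x.
Proof. unfold bsub. rewrite vopp_scal, vscal_0_r, badd_0. reflexivity. Qed.

Lemma vsub_add x y : (x -v y) +v y = x.
Proof.
  unfold bsub. rewrite <- badd_assoc, (badd_comm _ (bopp y)), badd_opp, badd_0. reflexivity.
Qed.

Lemma vadd_sub x y : (x +v y) -v y = x.
Proof. unfold bsub. rewrite <- badd_assoc, badd_opp, badd_0. reflexivity. Qed.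

Lemma vadd_sub_l x y : (x +v y) -v x = y.
Proof. rewrite badd_comm. apply vadd_sub. Qed.

Lemma vadd_sub_decomp x y : x = y +v (x -v y).
Proof. rewrite badd_comm. symmetry. apply vsub_add. Qed.

Lemma vsub_eq0 x y : x -v y = 0v -> x = y.
Proof. intros H. rewrite <- (vsub_add x y), H. apply vadd_0_l. Qed.

Lemma vnorm_0 : nrm 0v = 0.
Proof. rewrite <- (vscal_0_l 0v), bnorm_scal, sabs_0. ring. Qed.

Lemma vnorm_pos x : x <> 0v -> 0 < nrm x.
Proof.
  intros H. destruct (bnorm_nonneg _ x) as [Hlt | Heq]; [exact Hlt|].
  exfalso. apply H, bnorm_eq0. symmetry. exact Heq.
Qed.

Lemma vnorm_opp x : nrm (bopp x) = nrm x.
Proof. rewrite vopp_scal, bnorm_scal, sabs_opp, sabs_1. ring. Qed.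

Lemma vopp_sub x y : bopp (x -v y) = y -v x.
Proof.
  rewrite vopp_scal, !vsub_scal, bscal_addr, <- bscal_mul, badd_comm.
  replace (smul (sopp s1) (sopp s1)) with s1 by ring. rewrite bscal_1. reflexivity.
Qed.

Lemma vnorm_sub_sym x y : nrm (x -v y) = nrm (y -v x).
Proof. rewrite <- vopp_sub, vnorm_opp. reflexivity. Qed.

Lemma vnorm_sub_triangle x y z : nrm (x -v z) <= nrm (x -v y) + nrm (y -v z).
Proof.
  replace (x -v z) with ((x -v y) +v (y -v z)); [apply bnorm_tri|].
  unfold bsub. rewrite <- badd_assoc, (badd_assoc _ (bopp y)), (badd_comm _ (bopp y)),
    badd_opp, vadd_0_l. reflexivity.
Qed.

Lemma vnorm_sub_le x y : nrm (x -v y) <= nrm x + nrm y.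
Proof. unfold bsub. rewrite <- (vnorm_opp y). apply bnorm_tri. Qed.

Lemma vnorm_rev_add x y : nrm x - nrm y <= nrm (x +v y).
Proof.
  pose proof (bnorm_tri _ (x +v y) (bopp y)) as H. rewrite vnorm_opp in H.
  change (badd (x +v y) (bopp y)) with ((x +v y) -v y) in H. rewrite vadd_sub in H. lra.
Qed.

Lemma vscal_sub_r a x y : a *v (x -v y) = a *v x -v a *v y.
Proof.
  unfold bsub. rewrite bscal_addr, !vscal_opp, vopp_scal, <- bscal_mul.
  f_equal. f_equal. ring.
Qed.

Lemma vscal_sub_l a b x : sadd a (sopp b) *v x = a *v x -v b *v x.
Proof.
  rewrite bscal_addl. unfold bsub. rewrite vopp_scal, <- bscal_mul. f_equal. f_equal. ring.
Qed.

Lemma vadd_swap x y z w : (x +v y) +v (z +v w) = (x +v z) +v (y +v w).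
Proof.
  rewrite (badd_assoc _ (x +v y) z w), <- (badd_assoc _ x y z), (badd_comm _ y z),
    (badd_assoc _ x z y), <- (badd_assoc _ (x +v z) y w). reflexivity.
Qed.

Lemma vopp_add x y : bopp (x +v y) = bopp x +v bopp y.
Proof. rewrite !vopp_scal. apply bscal_addr. Qed.

Lemma vsub_add_distr x y z w : (x +v y) -v (z +v w) = (x -v z) +v (y -v w).
Proof. unfold bsub. rewrite vopp_add, vadd_swap. reflexivity. Qed.

Lemma vsub_sub_distr x y z w : (x -v y) -v (z -v w) = (x -v z) -v (y -v w).
Proof. rewrite !vsub_scal, !bscal_addr. apply vadd_swap. Qed.

Lemma vadd_sub_cancel_r x y z : (x +v z) -v (y +v z) = x -v y.
Proof. rewrite vsub_add_distr, vsub_diag, badd_0. reflexivity. Qed.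

Lemma vadd_sub_cancel_l x y z : (z +v x) -v (z +v y) = x -v y.
Proof. rewrite (badd_comm _ z x), (badd_comm _ z y). apply vadd_sub_cancel_r. Qed.

Lemma vsub_sub_cancel_r x y z : (x -v z) -v (y -v z) = x -v y.
Proof. exact (vadd_sub_cancel_r x y (bopp z)). Qed.

Lemma vadd_sub_assoc x y z : (x +v y) -v z = x +v (y -v z).
Proof. unfold bsub. rewrite badd_assoc. reflexivity. Qed.

Lemma vsub_add_assoc x y z : x -v (y +v z) = (x -v y) -v z.
Proof. unfold bsub. rewrite vopp_add, badd_assoc. reflexivity. Qed.

Lemma vscal_diff a b x y : a *v x -v b *v y = a *v (x -v y) +v sadd a (sopp b) *v y.
Proof.
  rewrite vscal_sub_r, vscal_sub_l. unfold bsub. rewrite <- badd_assoc. f_equal.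
  rewrite badd_assoc, (badd_comm _ (bopp _) (a *v y)), badd_opp, vadd_0_l. reflexivity.
Qed.

Lemma vscal_sinv_cancel a x : a <> s0 -> a *v (sinv a *v x) = x.
Proof. intros Ha. rewrite <- bscal_mul, sinv_r by exact Ha. apply bscal_1. Qed.

Lemma vscal_inv_diff_bound a b x y : a <> s0 -> b <> s0 ->
  nrm (sinv a *v x -v sinv b *v y)
  <= / sabs a * nrm (x -v y) + / sabs a * / sabs b * sabs (sadd b (sopp a)) * nrm y.
Proof.
  intros Ha Hb. rewrite vscal_diff.
  replace (sadd (sinv a) (sopp (sinv b))) with (smul (smul (sinv a) (sinv b)) (sadd b (sopp a)))
    by (field; auto).
  eapply Rle_trans; [apply bnorm_tri|].
  rewrite !bnorm_scal, !sabs_mul, !sabs_inv by auto. lra.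
Qed.

Section LinearMap.
Variable T : X -> X.
Hypothesis T_lin : is_linear T.

Lemma lin_add x y : T (x +v y) = T x +v T y.
Proof. rewrite <- (bscal_1 _ x) at 1. rewrite T_lin, bscal_1. reflexivity. Qed.

Lemma lin_0 : T 0v = 0v.
Proof. apply (vadd_cancel_l (T 0v)). rewrite <- lin_add, !badd_0. reflexivity. Qed.

Lemma lin_scal a x : T (a *v x) = a *v T x.
Proof. rewrite <- (badd_0 _ (a *v x)), T_lin, lin_0, badd_0. reflexivity. Qed.

Lemma lin_sub x y : T (x -v y) = T x -v T y.
Proof. unfold bsub. rewrite lin_add, !vopp_scal, lin_scal. reflexivity. Qed.

End LinearMap.

Lemma op_sub_linear (T U : X -> X) : is_linear T -> is_linear U -> is_linear (op_sub T U).
Proof.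
  intros HT HU b x y. unfold op_sub. rewrite HT, HU, vsub_add_distr, vscal_sub_r. reflexivity.
Qed.

Lemma opnorm_nonneg (T : X -> X) c : is_linear T -> is_opnorm T c -> 0 <= c.
Proof.
  intros HT [Hub _]. apply Hub. exists 0v. rewrite (lin_0 T HT), vnorm_0. split; [lra | reflexivity].
Qed.

Lemma opnorm_bound (T : X -> X) c : is_linear T -> is_opnorm T c -> forall x, nrm (T x) <= c * nrm x.
Proof.
  intros HT Hop x. pose proof (opnorm_nonneg T c HT Hop) as Hc. destruct Hop as [Hub _].
  destruct (Req_dec (nrm x) 0) as [Hx0 | Hx0].
  - apply bnorm_eq0 in Hx0. subst x. rewrite (lin_0 T HT), vnorm_0. lra.
  - assert (Hx : 0 < nrm x) by (pose proof (bnorm_nonneg _ x); lra).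
    destruct (sabs_onto (/ nrm x)) as [k Hk]; [left; apply Rinv_0_lt_compat; exact Hx|].
    assert (H1 : nrm (T (k *v x)) <= c).
    { apply Hub. exists (k *v x). split; [|reflexivity].
      rewrite bnorm_scal, Hk, Rinv_l; lra. }
    rewrite (lin_scal T HT), bnorm_scal, Hk in H1.
    apply (Rmult_le_reg_l (/ nrm x)); [apply Rinv_0_lt_compat; exact Hx|].
    replace (/ nrm x * (c * nrm x)) with c by (field; lra). exact H1.
Qed.

Definition is_linform (f : X -> S) := forall a x y, f (a *v x +v y) = sadd (smul a (f x)) (f y).

Section LinearForm.
Variable f : X -> S.
Hypothesis f_lin : is_linform f.

Lemma linform_add x y : f (x +v y) = sadd (f x) (f y).
Proof. rewrite <- (bscal_1 _ x) at 1. rewrite f_lin. ring. Qed.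

Lemma linform_0 : f 0v = s0.
Proof.
  pose proof (linform_add 0v 0v) as H. rewrite badd_0 in H.
  replace s0 with (sadd (f 0v) (sopp (f 0v))) by ring.
  rewrite H at 2. ring.
Qed.

Lemma linform_scal a x : f (a *v x) = smul a (f x).
Proof. rewrite <- (badd_0 _ (a *v x)), f_lin, linform_0. ring. Qed.

Lemma linform_sub x y : f (x -v y) = sadd (f x) (sopp (f y)).
Proof. unfold bsub. rewrite linform_add, vopp_scal, linform_scal. ring. Qed.

End LinearForm.

Lemma eig_proj_linear (phi : X -> S) u : is_linform phi -> is_linear (eig_proj phi u).
Proof. intros Hphi b x y. unfold eig_proj. rewrite Hphi, bscal_addl, bscal_mul. reflexivity. Qed.

Lemma eig_coproj_linear (phi : X -> S) u : is_linform phi -> is_linear (eig_coproj phi u).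
Proof.
  intros Hphi b x y. unfold eig_coproj.
  rewrite (eig_proj_linear _ _ Hphi), vsub_add_distr, vscal_sub_r.
  reflexivity.
Qed.

(** * Convergence and contractions *)

Definition conv (s : nat -> X) (l : X) := Un_cv (fun n => nrm (s n -v l)) 0.

Definition closed_set (P : X -> Prop) := forall s l, (forall n, P (s n)) -> conv s l -> P l.

Lemma Rle_forall_eps (A B : R) : (forall eps, 0 < eps -> A <= B + eps) -> A <= B.
Proof.
  intros H. destruct (Rle_dec A B) as [Hle | Hgt]; [exact Hle|].
  specialize (H ((A - B) / 2)). lra.
Qed.

Lemma conv_get s l : conv s l ->
  forall eps, 0 < eps -> exists N, forall n, (n >= N)%nat -> nrm (s n -v l) < eps.
Proof.
  intros H eps He. destruct (H eps He) as [N HN]. exists N. intros n Hn.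
  specialize (HN n Hn). unfold Rdist in HN.
  rewrite Rminus_0_r, Rabs_pos_eq in HN by apply bnorm_nonneg. exact HN.
Qed.

Lemma conv_intro s l :
  (forall eps, 0 < eps -> exists N, forall n, (n >= N)%nat -> nrm (s n -v l) < eps) -> conv s l.
Proof.
  intros H eps He. destruct (H eps He) as [N HN]. exists N. intros n Hn.
  unfold Rdist. rewrite Rminus_0_r, Rabs_pos_eq by apply bnorm_nonneg. exact (HN n Hn).
Qed.

Lemma conv_unique s l1 l2 : conv s l1 -> conv s l2 -> l1 = l2.
Proof.
  intros H1 H2. apply vsub_eq0, bnorm_eq0. apply Rle_antisym; [|apply bnorm_nonneg].
  apply Rle_forall_eps. intros eps He.
  destruct (conv_get _ _ H1 (eps / 2)) as [N1 HN1]; [lra|].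
  destruct (conv_get _ _ H2 (eps / 2)) as [N2 HN2]; [lra|].
  specialize (HN1 (N1 + N2)%nat ltac:(lia)). specialize (HN2 (N1 + N2)%nat ltac:(lia)).
  pose proof (vnorm_sub_triangle l1 (s (N1 + N2)%nat) l2) as H.
  rewrite (vnorm_sub_sym l1 (s (N1 + N2)%nat)) in H. lra.
Qed.

Lemma conv_ext s t l : (forall n, s n = t n) -> conv s l -> conv t l.
Proof.
  intros Hst H. apply conv_intro. intros eps Heps. destruct (conv_get _ _ H eps Heps) as [N HN].
  exists N. intros n Hn. rewrite <- Hst. auto.
Qed.

Lemma conv_const x : conv (fun _ => x) x.
Proof. apply conv_intro. intros eps He. exists O. intros. rewrite vsub_diag, vnorm_0. exact He. Qed.

Lemma conv_shift s l : conv s l -> conv (fun n => s (Datatypes.S n)) l.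
Proof.
  intros H. apply conv_intro. intros eps He. destruct (conv_get _ _ H eps He) as [N HN].
  exists N. intros n Hn. apply HN. lia.
Qed.

Lemma conv_lipschitz (T : X -> X) k s l : 0 <= k -> conv s l ->
  (forall n, nrm (T (s n) -v T l) <= k * nrm (s n -v l)) -> conv (fun n => T (s n)) (T l).
Proof.
  intros Hk H HT. apply conv_intro. intros eps He.
  destruct (conv_get _ _ H (eps / (k + 1))) as [N HN]; [apply Rdiv_lt_0_compat; lra|].
  exists N. intros n Hn. specialize (HN n Hn). specialize (HT n).
  apply Rle_lt_trans with (k * nrm (s n -v l)); [exact HT|].
  apply Rle_lt_trans with (k * (eps / (k + 1))); [apply Rmult_le_compat_l; lra|].
  apply Rlt_le_trans with ((k + 1) * (eps / (k + 1))); [|right; field; lra].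
  apply Rmult_lt_compat_r; [apply Rdiv_lt_0_compat|]; lra.
Qed.

Lemma conv_add s t l1 l2 : conv s l1 -> conv t l2 -> conv (fun n => s n +v t n) (l1 +v l2).
Proof.
  intros H1 H2. apply conv_intro. intros eps Heps.
  destruct (conv_get _ _ H1 (eps / 2)) as [N1 HN1]; [lra|].
  destruct (conv_get _ _ H2 (eps / 2)) as [N2 HN2]; [lra|].
  exists (N1 + N2)%nat. intros n Hn. rewrite vsub_add_distr.
  eapply Rle_lt_trans; [apply bnorm_tri|].
  specialize (HN1 n ltac:(lia)). specialize (HN2 n ltac:(lia)). lra.
Qed.

Lemma conv_scal b s l : conv s l -> conv (fun n => b *v s n) (b *v l).
Proof.
  intros H. apply (conv_lipschitz (bscal b) (sabs b)); auto.
  intros n. rewrite <- vscal_sub_r, bnorm_scal. lra.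
Qed.

Lemma conv_norm_le s l B : conv s l -> (forall n, nrm (s n) <= B) -> nrm l <= B.
Proof.
  intros H HB. apply Rle_forall_eps. intros eps He.
  destruct (conv_get _ _ H eps He) as [N HN]. specialize (HN N ltac:(lia)).
  pose proof (vnorm_sub_triangle l (s N) 0v) as A.
  rewrite !vsub_0_r, vnorm_sub_sym in A. pose proof (HB N). lra.
Qed.

Lemma conv_geometric_0 s C q : 0 <= q < 1 -> (forall n, nrm (s n) <= C * q ^ n) -> conv s 0v.
Proof.
  intros Hq H. apply conv_intro. intros eps Heps.
  destruct (pow_lt_1_zero q ltac:(rewrite Rabs_pos_eq; lra) (eps / (Rabs C + 1))) as [N HN].
  { apply Rdiv_lt_0_compat; [lra|]. pose proof (Rabs_pos C). lra. }
  exists N. intros n Hn. rewrite vsub_0_r. specialize (HN n Hn). specialize (H n).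
  rewrite Rabs_pos_eq in HN by (apply pow_le; lra).
  pose proof (Rabs_pos C). pose proof (Rle_abs C). pose proof (pow_le q n ltac:(lra)).
  apply Rle_lt_trans with ((Rabs C + 1) * q ^ n); [nra|].
  apply Rlt_le_trans with ((Rabs C + 1) * (eps / (Rabs C + 1))); [apply Rmult_lt_compat_l; lra|].
  right. field. lra.
Qed.

Section GeometricIncrements.
Variables (s : nat -> X) (C q : R).
Hypothesis q_range : 0 <= q < 1.
Hypothesis C_nonneg : 0 <= C.
Hypothesis increments : forall n, nrm (s (Datatypes.S n) -v s n) <= C * q ^ n.

Lemma geometric_partial_bound n m : nrm (s (n + m)%nat -v s n) <= C * (q ^ n - q ^ (n + m)) / (1 - q).
Proof.
  induction m as [|m IH].
  - rewrite Nat.add_0_r, vsub_diag, vnorm_0, Rminus_diag_eq by reflexivity. right. field. lra.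
  - rewrite Nat.add_succ_r. eapply Rle_trans; [apply (vnorm_sub_triangle _ (s (n + m)%nat))|].
    eapply Rle_trans; [apply Rplus_le_compat; [apply increments | exact IH]|].
    right. simpl. field. lra.
Qed.

Lemma geometric_cauchy_bound n m : (n <= m)%nat -> nrm (s m -v s n) <= C * q ^ n / (1 - q).
Proof.
  intros Hnm. replace m with (n + (m - n))%nat by lia.
  eapply Rle_trans; [apply geometric_partial_bound|].
  unfold Rdiv. apply Rmult_le_compat_r; [left; apply Rinv_0_lt_compat; lra|].
  apply Rmult_le_compat_l; [exact C_nonneg|]. pose proof (pow_le q (n + (m - n)) ltac:(lra)). lra.
Qed.

Lemma geometric_conv : exists l, conv s l.
Proof.
  destruct (bcomplete _ s) as [l Hl]; [|exists l; exact Hl].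
  intros eps He.
  destruct (pow_lt_1_zero q ltac:(rewrite Rabs_pos_eq; lra) (eps * (1 - q) / (C + 1))) as [N HN].
  { apply Rdiv_lt_0_compat; [apply Rmult_lt_0_compat|]; lra. }
  assert (Hk : forall n m, (N <= n)%nat -> (n <= m)%nat -> nrm (s m -v s n) < eps).
  { intros n m Hn Hnm. eapply Rle_lt_trans; [apply geometric_cauchy_bound; exact Hnm|].
    specialize (HN n Hn). rewrite Rabs_pos_eq in HN by (apply pow_le; lra).
    apply Rle_lt_trans with ((C + 1) * q ^ n / (1 - q)).
    - unfold Rdiv. apply Rmult_le_compat_r; [left; apply Rinv_0_lt_compat; lra|].
      apply Rmult_le_compat_r; [apply pow_le|]; lra.
    - apply Rlt_le_trans with ((C + 1) * (eps * (1 - q) / (C + 1)) / (1 - q)); [|right; field; lra].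
      unfold Rdiv. apply Rmult_lt_compat_r; [apply Rinv_0_lt_compat; lra|].
      apply Rmult_lt_compat_l; lra. }
  exists N. intros m n Hm Hn. change (badd (s m) (bopp (s n))) with (s m -v s n).
  destruct (Compare_dec.le_lt_dec n m).
  - apply Hk; auto.
  - rewrite vnorm_sub_sym. apply Hk; [|lia]. exact Hm.
Qed.

End GeometricIncrements.

Lemma contraction_fixed_point (P : X -> Prop) (T : X -> X) k x0 : closed_set P -> P x0 ->
  (forall x, P x -> P (T x)) -> 0 <= k < 1 ->
  (forall x y, P x -> P y -> nrm (T x -v T y) <= k * nrm (x -v y)) ->
  exists x, P x /\ T x = x.
Proof.
  intros HP Hx0 HT Hk HL.
  set (s := fun n => Nat.iter n T x0).
  assert (Hs : forall n, P (s n)) by (induction n; simpl; auto).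
  assert (Hstep : forall n, nrm (s (Datatypes.S n) -v s n) <= nrm (s 1%nat -v s O) * k ^ n).
  { induction n; [simpl; lra|].
    eapply Rle_trans; [apply (HL (s (Datatypes.S n)) (s n)); auto|].
    replace (nrm (s 1%nat -v s O) * k ^ Datatypes.S n) with (k * (nrm (s 1%nat -v s O) * k ^ n))
      by (simpl; ring).
    apply Rmult_le_compat_l; lra. }
  destruct (geometric_conv s _ k Hk (bnorm_nonneg _ _) Hstep) as [l Hl].
  assert (HPl : P l) by exact (HP s l Hs Hl).
  exists l. split; [exact HPl|].
  apply (conv_unique (fun n => T (s n))).
  - apply conv_lipschitz with k; [lra | exact Hl | intros n; apply HL; auto].
  - exact (conv_shift s l Hl).
Qed.

(** * The perturbed eigenvector *)

Section Perturbation.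

Variables (L0 L : X -> X) (u0 : X) (G0 : X -> Prop) (phi0 : X -> S).
Hypothesis L_lin : is_linear L.
Hypothesis G0_closed : closed_subspace G0.
Hypothesis phi0_lin : is_linform phi0.
Hypothesis phi0_L0 : forall x, phi0 (L0 x) = phi0 x.
Hypothesis phi0_ker : forall x, phi0 x = s0 <-> G0 x.
Hypothesis phi0_u0 : phi0 u0 = s1.
Hypothesis L0_u0 : L0 u0 = u0.

Variables (a dl tau p c e K : R).
Hypothesis L0_contr : forall x, G0 x -> nrm (L0 x) <= (1 - a) * nrm x.
Hypothesis proj0_bound : forall x, nrm (eig_proj phi0 u0 x) <= tau * nrm x.
Hypothesis coproj0_bound : forall x, nrm (eig_coproj phi0 u0 x) <= p * nrm x.
Hypothesis pert_bound : forall x, nrm (op_sub L L0 x) <= c * nrm x.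
Hypothesis u0_pos : 0 < nrm u0.
Hypothesis a_range : 0 < a < 1.
Hypothesis dl_range : 0 < dl < 1.
Hypothesis tau_nonneg : 0 <= tau.
Hypothesis p_nonneg : 0 <= p.
Hypothesis c_le_e : c <= e.
Hypothesis tau_c_le_e : tau * c <= e.
Hypothesis p_c_le_e : p * c <= e.
Hypothesis K_nonneg : 0 <= K.
Hypothesis e_nonneg : 0 <= e.
Hypothesis floor_pos : 0 < lam_floor e K.
Hypothesis ball_invariant : e + (1 - a + e) * K <= K * lam_floor e K.
Hypothesis rate_lt_1 : contr_rate a e K < 1.
Hypothesis slack_gap :
  phi_slack a e K + 1 - a + e <= (1 - dl) * (lam_floor e K - phi_slack a e K).

Local Notation ell := (lam_floor e K).
Local Notation r := (contr_rate a e K).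
Local Notation sp := (phi_slack a e K).
Local Notation nu := (nrm u0).
Local Notation pi0 := (eig_coproj phi0 u0).
Local Notation E := (op_sub L L0).

Lemma phi0_add x y : phi0 (x +v y) = sadd (phi0 x) (phi0 y).
Proof. exact (linform_add _ phi0_lin x y). Qed.

Lemma phi0_scal b x : phi0 (b *v x) = smul b (phi0 x).
Proof. exact (linform_scal _ phi0_lin b x). Qed.

Lemma phi0_sub x y : phi0 (x -v y) = sadd (phi0 x) (sopp (phi0 y)).
Proof. exact (linform_sub _ phi0_lin x y). Qed.

Lemma G0_phi0 x : G0 x -> phi0 x = s0.
Proof. apply phi0_ker. Qed.

Lemma G0_sub x y : G0 x -> G0 y -> G0 (x -v y).
Proof. intros Hx Hy. apply phi0_ker. rewrite phi0_sub, !G0_phi0 by auto. ring. Qed.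

Lemma G0_coproj0 x : G0 (pi0 x).
Proof.
  apply phi0_ker. unfold eig_coproj, eig_proj. rewrite phi0_sub, phi0_scal, phi0_u0. ring.
Qed.

Lemma L_split x : L x = L0 x +v E x.
Proof. unfold op_sub. apply vadd_sub_decomp. Qed.

Lemma phi0_abs_bound x : sabs (phi0 x) * nu <= tau * nrm x.
Proof. rewrite <- bnorm_scal. apply proj0_bound. Qed.

Lemma phi0_abs_le x : sabs (phi0 x) <= tau / nu * nrm x.
Proof.
  apply (Rmult_le_reg_r nu); [exact u0_pos|].
  replace (tau / nu * nrm x * nu) with (tau * nrm x) by (field; lra). apply phi0_abs_bound.
Qed.

Lemma phi0_pert_bound x : sabs (phi0 (E x)) * nu <= e * nrm x.
Proof.
  eapply Rle_trans; [apply phi0_abs_bound|]. pose proof (bnorm_nonneg _ x).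
  apply Rle_trans with (tau * (c * nrm x)); [apply Rmult_le_compat_l; auto|].
  rewrite <- Rmult_assoc. apply Rmult_le_compat_r; auto.
Qed.

Lemma coproj0_pert_bound x : nrm (pi0 (E x)) <= e * nrm x.
Proof.
  eapply Rle_trans; [apply coproj0_bound|]. pose proof (bnorm_nonneg _ x).
  apply Rle_trans with (p * (c * nrm x)); [apply Rmult_le_compat_l; auto|].
  rewrite <- Rmult_assoc. apply Rmult_le_compat_r; auto.
Qed.

Lemma L_G0_bound y : G0 y -> nrm (L y) <= (1 - a + e) * nrm y.
Proof.
  intros Hy. rewrite L_split. eapply Rle_trans; [apply bnorm_tri|].
  pose proof (L0_contr y Hy). pose proof (pert_bound y).
  assert (c * nrm y <= e * nrm y) by (apply Rmult_le_compat_r; [apply bnorm_nonneg | lra]). lra.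
Qed.

Lemma phi0_L_G0 y : G0 y -> phi0 (L y) = phi0 (E y).
Proof. intros Hy. rewrite L_split, phi0_add, phi0_L0, G0_phi0 by exact Hy. ring. Qed.

Lemma coproj0_L_G0_bound y : G0 y -> nrm (pi0 (L y)) <= (1 - a + e) * nrm y.
Proof.
  intros Hy.
  assert (Hdec : pi0 (L y) = L0 y +v pi0 (E y)).
  { unfold eig_coproj at 1, eig_proj. rewrite phi0_L_G0 by exact Hy.
    rewrite L_split. apply vadd_sub_assoc. }
  rewrite Hdec. eapply Rle_trans; [apply bnorm_tri|].
  pose proof (L0_contr y Hy). pose proof (coproj0_pert_bound y). lra.
Qed.

Lemma phi0_L_u0 : phi0 (L u0) = sadd s1 (phi0 (E u0)).
Proof. rewrite L_split, phi0_add, phi0_L0, phi0_u0. reflexivity. Qed.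

Lemma coproj0_L_u0 : pi0 (L u0) = pi0 (E u0).
Proof.
  unfold eig_coproj, eig_proj. rewrite phi0_L_u0, bscal_addl, bscal_1, (L_split u0), L0_u0.
  rewrite (badd_comm _ u0 (E u0)), (badd_comm _ u0 (_ *v u0)). apply vadd_sub_cancel_r.
Qed.

Definition lam_of h := phi0 (L (u0 +v h)).
Definition resid h := pi0 (L (u0 +v h)).
Definition eigvec_map h := sinv (lam_of h) *v resid h.
Definition small_G0 h := G0 h /\ nrm h <= K * nu.

Lemma u0_small_norm h : small_G0 h -> nrm (u0 +v h) <= (1 + K) * nu.
Proof. intros [_ Hh]. eapply Rle_trans; [apply bnorm_tri | lra]. Qed.

Lemma lam_of_lower h : small_G0 h -> ell <= sabs (lam_of h).
Proof.
  intros Hh.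
  assert (Hlam : lam_of h = sadd s1 (phi0 (E (u0 +v h)))).
  { unfold lam_of. rewrite L_split, phi0_add, phi0_L0, !phi0_add, phi0_u0, (G0_phi0 h) by apply Hh.
    ring. }
  assert (Hphi : sabs (phi0 (E (u0 +v h))) <= e * (1 + K)).
  { apply (Rmult_le_reg_r nu); [exact u0_pos|].
    eapply Rle_trans; [apply phi0_pert_bound|]. rewrite Rmult_assoc.
    apply Rmult_le_compat_l; [exact e_nonneg | apply u0_small_norm, Hh]. }
  rewrite Hlam. pose proof (sabs_rev_triangle s1 (phi0 (E (u0 +v h)))).
  unfold lam_floor. rewrite sabs_1 in *. lra.
Qed.

Lemma lam_of_neq0 h : small_G0 h -> lam_of h <> s0.
Proof.
  intros Hh H0. pose proof (lam_of_lower h Hh) as Hl. rewrite H0, sabs_0 in Hl. lra.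
Qed.

Lemma lam_of_diff h1 h2 : G0 h1 -> G0 h2 ->
  sabs (sadd (lam_of h1) (sopp (lam_of h2))) * nu <= e * nrm (h1 -v h2).
Proof.
  intros H1 H2. unfold lam_of. rewrite <- phi0_sub, <- (lin_sub _ L_lin), vadd_sub_cancel_l.
  rewrite phi0_L_G0 by (apply G0_sub; auto). apply phi0_pert_bound.
Qed.

Lemma resid_bound h : small_G0 h -> nrm (resid h) <= K * ell * nu.
Proof.
  intros [H1 H2]. unfold resid.
  rewrite (lin_add _ L_lin), (lin_add _ (eig_coproj_linear _ _ phi0_lin)), coproj0_L_u0.
  eapply Rle_trans; [apply bnorm_tri|].
  pose proof (coproj0_pert_bound u0). pose proof (coproj0_L_G0_bound h H1).
  assert ((1 - a + e) * nrm h <= (1 - a + e) * (K * nu)) by (apply Rmult_le_compat_l; lra).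
  nra.
Qed.

Lemma resid_diff h1 h2 : G0 h1 -> G0 h2 ->
  nrm (resid h1 -v resid h2) <= (1 - a + e) * nrm (h1 -v h2).
Proof.
  intros H1 H2. unfold resid.
  rewrite <- (lin_sub _ (eig_coproj_linear _ _ phi0_lin)), <- (lin_sub _ L_lin), vadd_sub_cancel_l.
  apply coproj0_L_G0_bound, G0_sub; auto.
Qed.

Lemma eigvec_map_small h : small_G0 h -> small_G0 (eigvec_map h).
Proof.
  intros Hh. split.
  - apply phi0_ker. unfold eigvec_map. rewrite phi0_scal. unfold resid.
    rewrite G0_phi0 by apply G0_coproj0. ring.
  - unfold eigvec_map. rewrite bnorm_scal, sabs_inv by (apply lam_of_neq0, Hh).
    pose proof (lam_of_lower h Hh). pose proof (resid_bound h Hh).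
    apply Rle_trans with (/ ell * (K * ell * nu)); [|right; field; lra].
    apply Rmult_le_compat; [left; apply Rinv_0_lt_compat; lra | apply bnorm_nonneg | |exact H0].
    apply Rinv_le_contravar; lra.
Qed.

Lemma eigvec_map_lipschitz h1 h2 : small_G0 h1 -> small_G0 h2 ->
  nrm (eigvec_map h1 -v eigvec_map h2) <= r * nrm (h1 -v h2).
Proof.
  intros P1 P2. unfold eigvec_map.
  eapply Rle_trans; [apply vscal_inv_diff_bound; apply lam_of_neq0; auto|].
  pose proof (lam_of_lower h1 P1) as B1. pose proof (lam_of_lower h2 P2) as B2.
  pose proof (resid_diff h1 h2 (proj1 P1) (proj1 P2)) as Hres.
  pose proof (lam_of_diff h2 h1 (proj1 P2) (proj1 P1)) as Hlam.
  rewrite (vnorm_sub_sym h2 h1) in Hlam.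
  pose proof (resid_bound h2 P2) as Hn2.
  set (d := nrm (h1 -v h2)) in *. set (A := sabs (sadd (lam_of h2) (sopp (lam_of h1)))) in *.
  assert (Hd : 0 <= d) by apply bnorm_nonneg.
  assert (HA : A <= e * d / nu).
  { apply (Rmult_le_reg_r nu); [exact u0_pos|].
    replace (e * d / nu * nu) with (e * d) by (field; lra). exact Hlam. }
  assert (Hi1 : 0 < / sabs (lam_of h1) <= / ell)
    by (split; [apply Rinv_0_lt_compat | apply Rinv_le_contravar]; lra).
  assert (Hi2 : 0 < / sabs (lam_of h2) <= / ell)
    by (split; [apply Rinv_0_lt_compat | apply Rinv_le_contravar]; lra).
  assert (T1 : / sabs (lam_of h1) * nrm (resid h1 -v resid h2) <= / ell * ((1 - a + e) * d))
    by (apply Rmult_le_compat; try lra; apply bnorm_nonneg).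
  assert (T2 : / sabs (lam_of h1) * / sabs (lam_of h2) * A * nrm (resid h2)
               <= / ell * / ell * (e * d / nu) * (K * ell * nu)).
  { assert (0 <= A) by apply sabs_nonneg.
    apply Rmult_le_compat; [| apply bnorm_nonneg | | exact Hn2].
    - apply Rmult_le_pos; [apply Rmult_le_pos|]; lra.
    - apply Rmult_le_compat; [apply Rmult_le_pos; lra | lra | apply Rmult_le_compat; lra | exact HA]. }
  replace (/ ell * / ell * (e * d / nu) * (K * ell * nu)) with (/ ell * (e * K * d)) in T2
    by (field; lra).
  unfold contr_rate. unfold Rdiv.
  replace ((1 - a + e * (1 + K)) * / ell * d) with (/ ell * ((1 - a + e) * d) + / ell * (e * K * d))
    by ring.
  lra.
Qed.

Lemma small_G0_closed : closed_set small_G0.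
Proof.
  intros s l Hs Hl. split.
  - destruct G0_closed as [_ [_ Hlim]]. apply (Hlim s); [intros n; apply Hs | exact Hl].
  - apply (conv_norm_le s); [exact Hl | intros n; apply Hs].
Qed.

Lemma contr_rate_nonneg : 0 <= r.
Proof.
  unfold contr_rate. apply Rdiv_le_0_compat; [|exact floor_pos].
  assert (0 <= e * (1 + K)) by (apply Rmult_le_pos; lra). lra.
Qed.

Lemma perturbed_eigvec_exists : exists h, small_G0 h /\ L (u0 +v h) = lam_of h *v (u0 +v h).
Proof.
  destruct (contraction_fixed_point small_G0 eigvec_map r 0v small_G0_closed) as [h [Hh Hfix]].
  - split; [apply phi0_ker, (linform_0 _ phi0_lin)|].
    rewrite vnorm_0. apply Rmult_le_pos; lra.
  - exact eigvec_map_small.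
  - pose proof contr_rate_nonneg. lra.
  - exact eigvec_map_lipschitz.
  - exists h. split; [exact Hh|].
    (* lam h = L (u0 + h) - lam u0 rearranges to the eigenvalue equation. *)
    unfold eigvec_map, resid, eig_coproj, eig_proj in Hfix. fold (lam_of h) in Hfix.
    apply (f_equal (bscal (lam_of h))) in Hfix.
    rewrite vscal_sinv_cancel in Hfix by (apply lam_of_neq0, Hh).
    rewrite (vadd_sub_decomp (L (u0 +v h)) (lam_of h *v u0)), Hfix, bscal_addr, badd_comm.
    reflexivity.
Qed.

(** * The stable complement *)

Section StableComplement.

Variables (h : X) (lam : S).
Hypothesis h_small : small_G0 h.
Hypothesis lam_lower : ell <= sabs lam.
Hypothesis h_eig : L (u0 +v h) = lam *v (u0 +v h).

Local Notation u := (u0 +v h).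
Local Notation rho := (eig_coproj phi0 (u0 +v h)).
Local Notation U := (nrm (u0 +v h)).
Local Notation beta := (e / (nu * sabs lam)).

Definition Lhat x := sinv lam *v L x.
Definition Lhat_pow n := op_pow n Lhat.

Definition stable x := conv (fun n => Lhat_pow n x) 0v.

Lemma lam_pos : 0 < sabs lam.
Proof. lra. Qed.

Lemma lam_neq0 : lam <> s0.
Proof. intros H0. pose proof lam_pos as H. rewrite H0, sabs_0 in H. lra. Qed.

Lemma phi0_u : phi0 u = s1.
Proof. rewrite phi0_add, phi0_u0, G0_phi0 by apply h_small. ring. Qed.

Lemma Lhat_linear : is_linear Lhat.
Proof.
  intros b x y. unfold Lhat. rewrite L_lin, bscal_addr, <- !bscal_mul. f_equal. f_equal. ring.
Qed.

Lemma Lhat_pow_linear n : is_linear (Lhat_pow n).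
Proof.
  induction n as [|n IH]; intros b x y; [reflexivity|].
  unfold Lhat_pow, op_pow in *. simpl. rewrite IH. apply Lhat_linear.
Qed.

Lemma Lhat_pow_S n x : Lhat_pow (Datatypes.S n) x = Lhat (Lhat_pow n x).
Proof. reflexivity. Qed.

Lemma L_Lhat x : L x = lam *v Lhat x.
Proof. unfold Lhat. rewrite vscal_sinv_cancel by exact lam_neq0. reflexivity. Qed.

Lemma Lhat_u : Lhat u = u.
Proof.
  unfold Lhat. rewrite h_eig, <- bscal_mul.
  replace (smul (sinv lam) lam) with s1 by (field; exact lam_neq0). apply bscal_1.
Qed.

Lemma Lhat_pow_line n b : Lhat_pow n (b *v u) = b *v u.
Proof.
  rewrite (lin_scal _ (Lhat_pow_linear n)). f_equal.
  induction n as [|n IH]; [reflexivity|]. rewrite Lhat_pow_S, IH. apply Lhat_u.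
Qed.

Lemma G0_rho x : G0 (rho x).
Proof.
  apply phi0_ker. unfold eig_coproj, eig_proj. rewrite phi0_sub, phi0_scal, phi0_u. ring.
Qed.

Lemma rho_decomp x : x = rho x +v phi0 x *v u.
Proof. symmetry. apply vsub_add. Qed.

Lemma phi0_u_bound x : sabs (phi0 x) * U <= tau / nu * U * nrm x.
Proof. pose proof (phi0_abs_le x). pose proof (bnorm_nonneg _ u). nra. Qed.

Lemma rho_bound x : nrm (rho x) <= (1 + tau / nu * U) * nrm x.
Proof.
  unfold eig_coproj, eig_proj. eapply Rle_trans; [apply vnorm_sub_le|].
  rewrite bnorm_scal. pose proof (phi0_u_bound x). lra.
Qed.

Lemma rho_Lhat_G0 y : G0 y -> nrm (rho (Lhat y)) <= r * nrm y.
Proof.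
  intros Hy. unfold eig_coproj at 1, eig_proj, Lhat.
  rewrite phi0_scal, bscal_mul, <- vscal_sub_r, bnorm_scal, sabs_inv by exact lam_neq0.
  rewrite bscal_addr, vsub_add_assoc. fold (eig_proj phi0 u0 (L y)) (eig_coproj phi0 u0 (L y)).
  assert (B : nrm (pi0 (L y) -v phi0 (L y) *v h) <= (1 - a + e * (1 + K)) * nrm y).
  { eapply Rle_trans; [apply vnorm_sub_le|]. rewrite bnorm_scal, phi0_L_G0 by exact Hy.
    pose proof (coproj0_L_G0_bound y Hy). pose proof (phi0_pert_bound y).
    assert (sabs (phi0 (E y)) * nrm h <= e * nrm y * K).
    { apply Rle_trans with (sabs (phi0 (E y)) * (K * nu));
        [apply Rmult_le_compat_l; [apply sabs_nonneg | apply h_small]|].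
      rewrite (Rmult_comm K), <- Rmult_assoc. apply Rmult_le_compat_r; auto. }
    lra. }
  pose proof lam_pos.
  apply Rle_trans with (/ ell * ((1 - a + e * (1 + K)) * nrm y)).
  - apply Rmult_le_compat; [left; apply Rinv_0_lt_compat; lra | apply bnorm_nonneg | | exact B].
    apply Rinv_le_contravar; lra.
  - unfold contr_rate. right. unfold Rdiv. ring.
Qed.

Lemma phi0_Lhat_G0 y : G0 y -> sabs (phi0 (Lhat y)) <= beta * nrm y.
Proof.
  intros Hy. unfold Lhat.
  rewrite phi0_scal, sabs_mul, sabs_inv, phi0_L_G0 by (exact Hy || exact lam_neq0).
  pose proof (phi0_pert_bound y). pose proof lam_pos.
  apply (Rmult_le_reg_r (nu * sabs lam)); [apply Rmult_lt_0_compat; lra|].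
  replace (/ sabs lam * sabs (phi0 (E y)) * (nu * sabs lam)) with (sabs (phi0 (E y)) * nu)
    by (field; lra).
  replace (e / (nu * sabs lam) * nrm y * (nu * sabs lam)) with (e * nrm y) by (field; lra).
  assumption.
Qed.

Lemma phi0_Lhat_pow_S n x :
  phi0 (Lhat_pow (Datatypes.S n) x) = sadd (phi0 (Lhat (rho (Lhat_pow n x)))) (phi0 (Lhat_pow n x)).
Proof.
  rewrite Lhat_pow_S, (rho_decomp (Lhat_pow n x)) at 1.
  rewrite (lin_add _ Lhat_linear), (lin_scal _ Lhat_linear), Lhat_u, phi0_add, phi0_scal, phi0_u.
  ring.
Qed.

Lemma rho_Lhat_pow_S n x : rho (Lhat_pow (Datatypes.S n) x) = rho (Lhat (rho (Lhat_pow n x))).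
Proof.
  unfold eig_coproj at 1, eig_proj at 1.
  rewrite phi0_Lhat_pow_S, Lhat_pow_S, (rho_decomp (Lhat_pow n x)) at 1.
  rewrite (lin_add _ Lhat_linear), (lin_scal _ Lhat_linear), Lhat_u, bscal_addl.
  apply vadd_sub_cancel_r.
Qed.

Lemma contr_rate_pow_le n : r ^ n <= 1.
Proof. pose proof contr_rate_nonneg. rewrite <- (pow1 n). apply pow_incr. lra. Qed.

Lemma rho_Lhat_pow_bound n x : nrm (rho (Lhat_pow n x)) <= r ^ n * nrm (rho x).
Proof.
  induction n as [|n IH]; [simpl; lra|].
  rewrite rho_Lhat_pow_S. eapply Rle_trans; [apply rho_Lhat_G0, G0_rho|].
  simpl. rewrite Rmult_assoc. apply Rmult_le_compat_l; [apply contr_rate_nonneg | exact IH].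
Qed.

Lemma beta_nonneg : 0 <= beta.
Proof. pose proof lam_pos. apply Rdiv_le_0_compat; [lra | apply Rmult_lt_0_compat; lra]. Qed.

Lemma phi0_Lhat_pow_step n x :
  sabs (sadd (phi0 (Lhat_pow (Datatypes.S n) x)) (sopp (phi0 (Lhat_pow n x))))
  <= beta * (r ^ n * nrm (rho x)).
Proof.
  rewrite phi0_Lhat_pow_S.
  replace (sadd (sadd (phi0 (Lhat (rho (Lhat_pow n x)))) (phi0 (Lhat_pow n x)))
                (sopp (phi0 (Lhat_pow n x))))
    with (phi0 (Lhat (rho (Lhat_pow n x)))) by ring.
  eapply Rle_trans; [apply phi0_Lhat_G0, G0_rho|].
  apply Rmult_le_compat_l; [apply beta_nonneg | apply rho_Lhat_pow_bound].
Qed.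

Lemma phi0_Lhat_pow_drift n x :
  sabs (sadd (phi0 (Lhat_pow n x)) (sopp (phi0 x))) <= beta * nrm (rho x) / (1 - r).
Proof.
  apply Rle_trans with (beta * nrm (rho x) * (1 - r ^ n) / (1 - r)).
  - induction n as [|n IH].
    + replace (sadd (phi0 (Lhat_pow 0 x)) (sopp (phi0 x))) with s0 by (simpl; ring).
      rewrite sabs_0. simpl. right. field. lra.
    + replace (sadd (phi0 (Lhat_pow (Datatypes.S n) x)) (sopp (phi0 x))) with
        (sadd (sadd (phi0 (Lhat_pow (Datatypes.S n) x)) (sopp (phi0 (Lhat_pow n x))))
              (sadd (phi0 (Lhat_pow n x)) (sopp (phi0 x)))) by ring.
      eapply Rle_trans; [apply sabs_triangle|].
      eapply Rle_trans; [apply Rplus_le_compat; [apply phi0_Lhat_pow_step | exact IH]|].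
      right. simpl. field. lra.
  - unfold Rdiv. apply Rmult_le_compat_r; [left; apply Rinv_0_lt_compat; lra|].
    pose proof (pow_le r n contr_rate_nonneg).
    pose proof (Rmult_le_pos _ _ beta_nonneg (bnorm_nonneg _ (rho x))). nra.
Qed.

Lemma Lhat_pow_increment n x :
  nrm (Lhat_pow (Datatypes.S n) x -v Lhat_pow n x) <= ((r + 1 + beta * U) * nrm (rho x)) * r ^ n.
Proof.
  rewrite (rho_decomp (Lhat_pow (Datatypes.S n) x)), (rho_decomp (Lhat_pow n x)) at 1.
  rewrite vsub_add_distr, <- vscal_sub_l.
  eapply Rle_trans; [apply bnorm_tri|]. rewrite bnorm_scal.
  eapply Rle_trans; [apply Rplus_le_compat;
    [apply vnorm_sub_le | apply Rmult_le_compat_r; [apply bnorm_nonneg | apply phi0_Lhat_pow_step]]|].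
  pose proof (rho_Lhat_pow_bound (Datatypes.S n) x) as H1.
  change (r ^ Datatypes.S n) with (r * r ^ n) in H1.
  pose proof (rho_Lhat_pow_bound n x). pose proof (bnorm_nonneg _ (rho x)).
  pose proof contr_rate_nonneg. pose proof beta_nonneg. pose proof (bnorm_nonneg _ u).
  pose proof (pow_le r n contr_rate_nonneg). nra.
Qed.

Lemma Lhat_pow_conv x : exists l, conv (fun n => Lhat_pow n x) l.
Proof.
  apply (geometric_conv _ ((r + 1 + beta * U) * nrm (rho x)) r).
  - split; [apply contr_rate_nonneg | exact rate_lt_1].
  - pose proof contr_rate_nonneg. pose proof beta_nonneg. pose proof (bnorm_nonneg _ u).
    apply Rmult_le_pos; [nra | apply bnorm_nonneg].
  - intros n. apply Lhat_pow_increment.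
Qed.

Lemma Lhat_pow_limit_on_line x l : conv (fun n => Lhat_pow n x) l -> l = phi0 l *v u.
Proof.
  intros Hl.
  assert (Hrho : conv (fun n => rho (Lhat_pow n x)) 0v).
  { apply (conv_geometric_0 _ (nrm (rho x)) r); [split; [apply contr_rate_nonneg | exact rate_lt_1]|].
    intros n. rewrite Rmult_comm. apply rho_Lhat_pow_bound. }
  assert (Hline : conv (fun n => phi0 (Lhat_pow n x) *v u) (phi0 l *v u)).
  { apply (conv_lipschitz (fun y => phi0 y *v u) (tau / nu * U)); [| exact Hl |].
    - apply Rmult_le_pos; [apply Rdiv_le_0_compat; lra | apply bnorm_nonneg].
    - intros n. rewrite <- vscal_sub_l, bnorm_scal, <- phi0_sub. apply phi0_u_bound. }
  pose proof (conv_add _ _ _ _ Hrho Hline) as Hsum. rewrite vadd_0_l in Hsum.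
  apply (conv_unique (fun n => Lhat_pow n x)); [exact Hl|].
  apply (conv_ext _ _ _ (fun n => eq_sym (rho_decomp (Lhat_pow n x)))). exact Hsum.
Qed.

Lemma stable_comb b x y : stable x -> stable y -> stable (b *v x +v y).
Proof.
  intros Hx Hy. pose proof (conv_add _ _ _ _ (conv_scal b _ _ Hx) Hy) as H.
  rewrite vscal_0_r, badd_0 in H.
  apply (conv_ext _ _ _ (fun n => eq_sym (Lhat_pow_linear n b x y))). exact H.
Qed.

Lemma stable_0 : stable 0v.
Proof.
  apply (conv_ext (fun _ => 0v)); [|apply conv_const].
  intros n. symmetry. apply (lin_0 _ (Lhat_pow_linear n)).
Qed.

Lemma stable_scal b x : stable x -> stable (b *v x).
Proof. intros H. rewrite <- (badd_0 _ (b *v x)). apply stable_comb; [exact H | apply stable_0]. Qed.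

Lemma stable_sub x y : stable x -> stable y -> stable (x -v y).
Proof. intros Hx Hy. rewrite vsub_scal, badd_comm. apply stable_comb; assumption. Qed.

Lemma stable_L x : stable x -> stable (L x).
Proof.
  intros Hx. rewrite L_Lhat.
  apply (conv_ext (fun n => lam *v Lhat_pow (Datatypes.S n) x)).
  - intros n. rewrite (lin_scal _ (Lhat_pow_linear n)). f_equal.
    unfold Lhat_pow, op_pow. rewrite Nat.iter_succ_r. reflexivity.
  - rewrite <- (vscal_0_r lam). apply conv_scal. exact (conv_shift _ _ Hx).
Qed.

Lemma stable_decomp x : exists b g, stable g /\ x = b *v u +v g.
Proof.
  destruct (Lhat_pow_conv x) as [l Hl]. exists (phi0 l), (x -v phi0 l *v u). split.
  - pose proof (conv_add _ _ _ _ Hl (conv_const (bopp (phi0 l *v u)))) as H.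
    change (badd l (bopp (phi0 l *v u))) with (l -v phi0 l *v u) in H.
    assert (Hl0 : l -v phi0 l *v u = 0v).
    { rewrite <- (Lhat_pow_limit_on_line x l Hl) at 1. apply vsub_diag. }
    rewrite Hl0 in H.
    apply (conv_ext (fun n => Lhat_pow n x -v phi0 l *v u)); [|exact H].
    intros n. rewrite (lin_sub _ (Lhat_pow_linear n)), Lhat_pow_line. reflexivity.
  - apply vadd_sub_decomp.
Qed.

Lemma stable_line_trivial b : stable (b *v u) -> b *v u = 0v.
Proof.
  intros H. apply (conv_unique (fun n => Lhat_pow n (b *v u))); [|exact H].
  apply (conv_ext (fun _ => b *v u)); [|apply conv_const].
  intros n. symmetry. apply Lhat_pow_line.
Qed.

Local Notation Cb := (1 + tau / nu * U + (tau / nu + beta * (1 + tau / nu * U) / (1 - r)) * U).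

Lemma Cb_nonneg : 0 <= Cb.
Proof.
  assert (0 <= tau / nu) by (apply Rdiv_le_0_compat; lra).
  pose proof beta_nonneg. pose proof (bnorm_nonneg _ u).
  assert (0 <= beta * (1 + tau / nu * U) / (1 - r))
    by (apply Rdiv_le_0_compat; [apply Rmult_le_pos|]; nra).
  nra.
Qed.

Lemma Lhat_pow_uniform n x : nrm (Lhat_pow n x) <= Cb * nrm x.
Proof.
  rewrite (rho_decomp (Lhat_pow n x)). eapply Rle_trans; [apply bnorm_tri|]. rewrite bnorm_scal.
  set (b1 := 1 + tau / nu * U).
  assert (Ha1 : 0 <= tau / nu) by (apply Rdiv_le_0_compat; lra).
  pose proof beta_nonneg. pose proof (bnorm_nonneg _ u). pose proof (bnorm_nonneg _ x).
  assert (Hrho : nrm (rho x) <= b1 * nrm x) by apply rho_bound.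
  assert (HD : nrm (rho (Lhat_pow n x)) <= b1 * nrm x).
  { eapply Rle_trans; [apply rho_Lhat_pow_bound|].
    pose proof (contr_rate_pow_le n). pose proof (pow_le r n contr_rate_nonneg).
    pose proof (bnorm_nonneg _ (rho x)). nra. }
  assert (Hphi : sabs (phi0 (Lhat_pow n x)) <= (tau / nu + beta * b1 / (1 - r)) * nrm x).
  { pose proof (phi0_Lhat_pow_drift n x). pose proof (phi0_abs_le x).
    pose proof (sabs_rev_triangle (phi0 (Lhat_pow n x)) (sopp (phi0 x))) as Hrev.
    rewrite sabs_opp in Hrev.
    assert (beta * nrm (rho x) / (1 - r) <= beta * b1 / (1 - r) * nrm x).
    { set (bt := e / (nu * sabs lam)) in *.
      replace (bt * b1 / (1 - r) * nrm x) with (bt / (1 - r) * (b1 * nrm x)) by (field; lra).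
      replace (bt * nrm (rho x) / (1 - r)) with (bt / (1 - r) * nrm (rho x)) by (field; lra).
      apply Rmult_le_compat_l; [apply Rdiv_le_0_compat; lra | exact Hrho]. }
    lra. }
  assert (sabs (phi0 (Lhat_pow n x)) * U <= (tau / nu + beta * b1 / (1 - r)) * nrm x * U)
    by (apply Rmult_le_compat_r; assumption).
  lra.
Qed.

Lemma stable_closed : closed_set stable.
Proof.
  intros s l Hs Hl. apply conv_intro. intros eps Heps.
  pose proof Lhat_pow_uniform as Hunif. pose proof Cb_nonneg as HC. set (C := Cb) in *.
  destruct (conv_get _ _ Hl (eps / 2 / (C + 1))) as [N1 HN1]; [apply Rdiv_lt_0_compat; lra|].
  specialize (HN1 N1 ltac:(lia)).
  destruct (conv_get _ _ (Hs N1) (eps / 2)) as [N2 HN2]; [lra|].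
  exists N2. intros n Hn. specialize (HN2 n Hn). rewrite vsub_0_r in *.
  rewrite (vadd_sub_decomp l (s N1)), (lin_add _ (Lhat_pow_linear n)).
  eapply Rle_lt_trans; [apply bnorm_tri|].
  pose proof (Hunif n (l -v s N1)) as Hu. rewrite (vnorm_sub_sym l) in Hu.
  assert (C * nrm (s N1 -v l) <= C * (eps / 2 / (C + 1))) by (apply Rmult_le_compat_l; lra).
  assert (C * (eps / 2 / (C + 1)) < eps / 2).
  { apply Rlt_le_trans with ((C + 1) * (eps / 2 / (C + 1))); [|right; field; lra].
    apply Rmult_lt_compat_r; [apply Rdiv_lt_0_compat|]; lra. }
  lra.
Qed.

Lemma stable_phi0_bound x : stable x -> sabs (phi0 x) <= beta * nrm (rho x) / (1 - r).
Proof.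
  intros Hx. apply Rle_forall_eps. intros eps Heps.
  assert (Ha1 : 0 <= tau / nu) by (apply Rdiv_le_0_compat; lra).
  destruct (conv_get _ _ Hx (eps / (tau / nu + 1))) as [N HN]; [apply Rdiv_lt_0_compat; lra|].
  specialize (HN N ltac:(lia)). rewrite vsub_0_r in HN.
  pose proof (phi0_Lhat_pow_drift N x). pose proof (phi0_abs_le (Lhat_pow N x)).
  pose proof (sabs_rev_triangle (phi0 x) (sadd (phi0 (Lhat_pow N x)) (sopp (phi0 x)))) as Hrev.
  replace (sadd (phi0 x) (sadd (phi0 (Lhat_pow N x)) (sopp (phi0 x)))) with (phi0 (Lhat_pow N x))
    in Hrev by ring.
  assert (tau / nu * nrm (Lhat_pow N x) <= eps).
  { apply Rle_trans with ((tau / nu + 1) * (eps / (tau / nu + 1))); [|right; field; lra].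
    apply Rmult_le_compat; try lra. apply bnorm_nonneg. }
  lra.
Qed.

Lemma stable_phi0_slack x : stable x -> sabs lam * (sabs (phi0 x) * U) <= sp * nrm (rho x).
Proof.
  intros Hx. pose proof lam_pos. pose proof (bnorm_nonneg _ (rho x)).
  assert (HU : U <= (1 + K) * nu) by (apply u0_small_norm, h_small).
  apply Rle_trans with (sabs lam * (beta * nrm (rho x) / (1 - r) * U)).
  { apply Rmult_le_compat_l; [lra|]. apply Rmult_le_compat_r; [apply bnorm_nonneg|].
    apply stable_phi0_bound, Hx. }
  replace (sabs lam * (e / (nu * sabs lam) * nrm (rho x) / (1 - r) * U))
    with (e * (U / nu) * nrm (rho x) / (1 - r)) by (field; lra).
  unfold phi_slack.
  replace (e * (1 + K) / (1 - r) * nrm (rho x)) with (e * (1 + K) * nrm (rho x) / (1 - r))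
    by (field; lra).
  unfold Rdiv. apply Rmult_le_compat_r; [left; apply Rinv_0_lt_compat; lra|].
  apply Rmult_le_compat_r; [lra|]. apply Rmult_le_compat_l; [lra|].
  apply (Rmult_le_reg_r nu); [exact u0_pos|].
  replace (U * / nu * nu) with U by (field; lra). exact HU.
Qed.

Lemma stable_rho_bound x : stable x -> nrm (rho x) * (ell - sp) <= ell * nrm x.
Proof.
  intros Hx. pose proof lam_pos. pose proof (bnorm_nonneg _ (rho x)).
  assert (Hsp : 0 <= sp).
  { unfold phi_slack. apply Rdiv_le_0_compat; [apply Rmult_le_pos|]; lra. }
  assert (Hyx : nrm (rho x) <= nrm x + sabs (phi0 x) * U).
  { unfold eig_coproj at 1, eig_proj. eapply Rle_trans; [apply vnorm_sub_le|].
    rewrite bnorm_scal. lra. }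
  assert (sabs (phi0 x) * U <= sp / ell * nrm (rho x)).
  { apply (Rmult_le_reg_l (sabs lam)); [lra|].
    eapply Rle_trans; [apply stable_phi0_slack, Hx|].
    replace (sabs lam * (sp / ell * nrm (rho x))) with (sabs lam / ell * (sp * nrm (rho x)))
      by (field; lra).
    rewrite <- (Rmult_1_l (sp * nrm (rho x))) at 1. apply Rmult_le_compat_r; [nra|].
    apply (Rmult_le_reg_r ell); [lra|].
    replace (sabs lam / ell * ell) with (sabs lam) by (field; lra).
    lra. }
  assert (nrm (rho x) <= nrm x + sp / ell * nrm (rho x)) by lra.
  apply (Rmult_le_compat_l ell) in H2; [|lra].
  replace (ell * (nrm x + sp / ell * nrm (rho x))) with (ell * nrm x + sp * nrm (rho x)) in H2
    by (field; lra).
  nra.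
Qed.

Lemma stable_L_contr x : stable x -> nrm (L x) <= sabs lam * (1 - dl) * nrm x.
Proof.
  intros Hx. pose proof lam_pos. pose proof (bnorm_nonneg _ x). pose proof (bnorm_nonneg _ (rho x)).
  rewrite (rho_decomp x) at 1. rewrite (lin_add _ L_lin), (lin_scal _ L_lin), h_eig.
  eapply Rle_trans; [apply bnorm_tri|]. rewrite !bnorm_scal.
  pose proof (L_G0_bound _ (G0_rho x)). pose proof (stable_phi0_slack x Hx).
  pose proof (stable_rho_bound x Hx).
  assert ((sp + 1 - a + e) * nrm (rho x) <= (1 - dl) * (ell - sp) * nrm (rho x))
    by (apply Rmult_le_compat_r; assumption).
  assert ((1 - dl) * (nrm (rho x) * (ell - sp)) <= (1 - dl) * (ell * nrm x))
    by (apply Rmult_le_compat_l; lra).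
  assert ((1 - dl) * ell * nrm x <= (1 - dl) * sabs lam * nrm x)
    by (apply Rmult_le_compat_r; [|apply Rmult_le_compat_l]; lra).
  nra.
Qed.

Lemma stable_spectral_gap : spectral_gap L lam stable dl 1.
Proof.
  intros x n Hx.
  assert (HG : forall k, stable (op_pow k L x)) by (induction k; simpl; auto using stable_L).
  pose proof lam_pos.
  induction n as [|n IH]; [simpl; lra|].
  change (op_pow (Datatypes.S n) L x) with (L (op_pow n L x)).
  eapply Rle_trans; [apply stable_L_contr, HG|].
  apply Rle_trans with (sabs lam * (1 - dl) * (1 * sabs lam ^ n * (1 - dl) ^ n * nrm x)).
  - apply Rmult_le_compat_l; [apply Rmult_le_pos; lra | exact IH].
  - right. simpl. ring.
Qed.

Definition solves_resolvent g x := stable x /\ L x -v lam *v x = g.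

Lemma resolvent_exists g : stable g -> exists x, solves_resolvent g x.
Proof.
  intros Hg. pose proof lam_pos.
  (* L x - lam x = g iff x = Lhat x - g / lam, a contraction of rate 1 - dl on the stable
     complement. *)
  destruct (contraction_fixed_point stable (fun x => Lhat x -v sinv lam *v g) (1 - dl) 0v
              stable_closed stable_0) as [x [Hx Hfix]].
  - intros x Hx. apply stable_sub; apply stable_scal; [apply stable_L|]; assumption.
  - lra.
  - intros x y Hx Hy. cbv beta. rewrite vsub_sub_cancel_r, <- (lin_sub _ Lhat_linear).
    unfold Lhat. rewrite bnorm_scal, sabs_inv by exact lam_neq0.
    eapply Rle_trans; [apply Rmult_le_compat_l;
      [left; apply Rinv_0_lt_compat; lra | apply stable_L_contr, stable_sub; assumption]|].
    right. field. lra.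
  - exists x. split; [exact Hx|]. cbv beta in Hfix.
    assert (HM : Lhat x = x +v sinv lam *v g) by (rewrite <- Hfix at 2; symmetry; apply vsub_add).
    rewrite L_Lhat, HM, bscal_addr, vscal_sinv_cancel by exact lam_neq0.
    apply vadd_sub_l.
Qed.

Lemma resolvent_unique g x1 x2 : solves_resolvent g x1 -> solves_resolvent g x2 -> x1 = x2.
Proof.
  intros [H1 E1] [H2 E2]. apply vsub_eq0, bnorm_eq0. set (d := x1 -v x2).
  assert (Hd : stable d) by (apply stable_sub; assumption).
  assert (HLd : L d = lam *v d).
  { apply vsub_eq0. unfold d. rewrite (lin_sub _ L_lin), vscal_sub_r, vsub_sub_distr, E1, E2.
    apply vsub_diag. }
  pose proof (stable_L_contr d Hd) as H. rewrite HLd, bnorm_scal in H.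
  pose proof lam_pos. pose proof (bnorm_nonneg _ d).
  assert (0 < sabs lam * dl) by (apply Rmult_lt_0_compat; lra). nra.
Qed.

Definition resolvent g := epsilon (inhabits 0v) (solves_resolvent g).

Lemma resolvent_spec g : stable g -> solves_resolvent g (resolvent g).
Proof. intros Hg. unfold resolvent. apply epsilon_spec, resolvent_exists, Hg. Qed.

Lemma resolvent_bound g : stable g -> nrm (resolvent g) <= / (dl * ell) * nrm g.
Proof.
  intros Hg. destruct (resolvent_spec g Hg) as [Hx Ex]. set (x := resolvent g) in *.
  assert (HLx : L x = g +v lam *v x) by (rewrite <- Ex; symmetry; apply vsub_add).
  pose proof (stable_L_contr x Hx) as H. rewrite HLx in H.
  pose proof (vnorm_rev_add (lam *v x) g) as Hrev. rewrite badd_comm, bnorm_scal in Hrev.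
  pose proof lam_pos. pose proof (bnorm_nonneg _ x).
  assert (sabs lam * dl * nrm x <= nrm g) by nra.
  assert (ell * dl * nrm x <= sabs lam * dl * nrm x)
    by (apply Rmult_le_compat_r; [|apply Rmult_le_compat_r]; lra).
  apply (Rmult_le_reg_l (dl * ell)); [apply Rmult_lt_0_compat; lra|].
  replace (dl * ell * (/ (dl * ell) * nrm g)) with (nrm g) by (field; lra). nra.
Qed.

Lemma stable_line_complement : line_complement u stable.
Proof.
  split; [|split; [exact stable_decomp | exact stable_line_trivial]].
  split; [exact stable_0|]. split; [exact stable_comb|]. exact stable_closed.
Qed.

Lemma perturbed_simple_eigen : simple_isolated_eigen L lam u stable.
Proof.
  split; [|split; [exact h_eig|split; [exact stable_line_complement|split; [exact stable_L|]]]].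
  - intros Hu. pose proof phi0_u as H. rewrite Hu, (linform_0 _ phi0_lin) in H.
    exact (s1_neq_s0 (eq_sym H)).
  - exists resolvent. split; [|split].
    + intros g Hg. apply (resolvent_spec g Hg).
    + intros g Hg. split; [|apply resolvent_spec, Hg].
      apply (resolvent_unique (L g -v lam *v g)); [|split; auto].
      apply resolvent_spec, stable_sub; [apply stable_L | apply stable_scal]; exact Hg.
    + exists (/ (dl * ell)). exact resolvent_bound.
Qed.

End StableComplement.

Lemma perturbation_spectral_gap :
  exists lam u G, simple_isolated_eigen L lam u G /\ spectral_gap L lam G dl 1.
Proof.
  destruct perturbed_eigvec_exists as [h [Hh Heig]].
  exists (lam_of h), (u0 +v h), (stable (lam_of h)).
  pose proof (lam_of_lower h Hh).
  split; [apply (perturbed_simple_eigen h) | apply (stable_spectral_gap h)]; assumption.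
Qed.

End Perturbation.

(** * Spectral gap under small perturbations *)

Lemma eig_proj_opnorm_ge_1 (phi : X -> S) u tau : phi u = s1 -> u <> 0v ->
  (forall x, nrm (eig_proj phi u x) <= tau * nrm x) -> 1 <= tau.
Proof.
  intros Hphi Hu Hb. pose proof (vnorm_pos u Hu) as Hpos. specialize (Hb u).
  unfold eig_proj in Hb. rewrite Hphi, bscal_1 in Hb.
  apply (Rmult_le_reg_r (nrm u)); lra.
Qed.

(* The only use of dim X >= 2: it makes ker phi nontrivial, which forces |pi| >= 1. *)
Lemma linform_kernel_nonzero (phi : X -> S) u : is_linform phi -> phi u = s1 ->
  (exists x y : X, forall a b, a *v x +v b *v y = 0v -> a = s0 /\ b = s0) ->
  exists g, phi g = s0 /\ g <> 0v.
Proof.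
  intros Hlin Hphi [x [y Hxy]].
  assert (Hker : forall z, phi (eig_coproj phi u z) = s0).
  { intros z. unfold eig_coproj, eig_proj. rewrite (linform_sub _ Hlin), (linform_scal _ Hlin), Hphi.
    ring. }
  destruct (classic (eig_coproj phi u x = 0v)) as [Ex | Ex]; [|exists (eig_coproj phi u x); auto].
  destruct (classic (eig_coproj phi u y = 0v)) as [Ey | Ey]; [|exists (eig_coproj phi u y); auto].
  exfalso. apply vsub_eq0 in Ex. apply vsub_eq0 in Ey. unfold eig_proj in Ex, Ey.
  (* x and y both lie on the line <u>, so phi y * x - phi x * y = 0. *)
  set (ax := phi x) in *. set (ay := phi y) in *.
  assert (Z : ay *v x +v sopp ax *v y = 0v).
  { rewrite Ex, Ey, <- !bscal_mul, <- bscal_addl.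
    replace (sadd (smul ay ax) (smul (sopp ax) ay)) with s0 by ring. apply vscal_0_l. }
  destruct (Hxy _ _ Z) as [_ Hx0].
  assert (Hx : ax = s0) by (replace ax with (sopp (sopp ax)) by ring; rewrite Hx0; ring).
  rewrite Hx, vscal_0_l in Ex.
  destruct (Hxy s1 s0) as [H10 _]; [rewrite Ex, vscal_0_r, vscal_0_l, badd_0; reflexivity|].
  exact (s1_neq_s0 H10).
Qed.

Lemma eig_coproj_opnorm_ge_1 (phi : X -> S) u p : is_linform phi -> phi u = s1 ->
  (exists x y : X, forall a b, a *v x +v b *v y = 0v -> a = s0 /\ b = s0) ->
  (forall x, nrm (eig_coproj phi u x) <= p * nrm x) -> 1 <= p.
Proof.
  intros Hlin Hphi Hdim Hb.
  destruct (linform_kernel_nonzero phi u Hlin Hphi Hdim) as [g [Hg Hg0]].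
  pose proof (vnorm_pos g Hg0). specialize (Hb g).
  unfold eig_coproj, eig_proj in Hb. rewrite Hg, vscal_0_l, vsub_0_r in Hb.
  apply (Rmult_le_reg_r (nrm g)); lra.
Qed.

Lemma small_perturbation_spectral_gap (L0 L : X -> X) (u0 : X) (G0 : X -> Prop) (phi0 : X -> S)
  (a dl tau p c : R) :
  is_linear L0 -> is_linear L -> closed_subspace G0 -> is_linform phi0 ->
  (forall x, phi0 (L0 x) = phi0 x) -> (forall x, phi0 x = s0 <-> G0 x) ->
  phi0 u0 = s1 -> L0 u0 = u0 -> u0 <> 0v ->
  0 < dl < a -> a < 1 ->
  (forall x, G0 x -> nrm (L0 x) <= (1 - a) * nrm x) ->
  (forall x, nrm (eig_proj phi0 u0 x) <= tau * nrm x) ->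
  (forall x, nrm (eig_coproj phi0 u0 x) <= p * nrm x) ->
  (forall x, nrm (op_sub L L0 x) <= c * nrm x) ->
  1 <= tau -> 1 <= p -> 0 <= c -> tau * p * c <= budget a dl ->
  exists lam u G, simple_isolated_eigen L lam u G /\ spectral_gap L lam G dl 1.
Proof.
  intros HL0 HL HG0 Hphi HphiL Hker Hphiu HL0u Hu0 Hdl Ha Hcontr Htau Hp HE Htau1 Hp1 Hc Hbudget.
  destruct (budget_constants a dl Hdl Ha) as [He [HK [Hl [Hball [Hr Hsg]]]]].
  (* tau, p >= 1, so c, tau c and p c are all at most tau p c. *)
  assert (0 <= tau * c) by (apply Rmult_le_pos; lra).
  assert (0 <= p * c) by (apply Rmult_le_pos; lra).
  assert (tau * c <= tau * p * c) by nra.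
  assert (p * c <= tau * p * c) by nra.
  assert (c <= p * c) by nra.
  apply (perturbation_spectral_gap L0 L u0 G0 phi0 HL HG0 Hphi HphiL Hker Hphiu HL0u
           a dl tau p c (budget a dl) (2 * budget a dl / a)); auto; try lra.
  apply vnorm_pos, Hu0.
Qed.

Lemma eig_projection_norms_ge_1 (L0 : X -> X) (u0 : X) (G0 : X -> Prop) (phi0 : X -> S)
  (tau p : R) :
  (exists x y : X, forall a b, a *v x +v b *v y = 0v -> a = s0 /\ b = s0) ->
  simple_isolated_eigen L0 s1 u0 G0 -> eigenform L0 s1 u0 G0 phi0 ->
  is_opnorm (eig_proj phi0 u0) tau -> is_opnorm (eig_coproj phi0 u0) p ->
  1 <= tau /\ 1 <= p.
Proof.
  intros Hdim [Hu0 _] [Hphi [_ [_ Hphiu]]] Htau Hp. split.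
  - apply (eig_proj_opnorm_ge_1 phi0 u0 tau Hphiu Hu0).
    exact (opnorm_bound _ _ (eig_proj_linear _ u0 Hphi) Htau).
  - apply (eig_coproj_opnorm_ge_1 phi0 u0 p Hphi Hphiu Hdim).
    exact (opnorm_bound _ _ (eig_coproj_linear _ u0 Hphi) Hp).
Qed.

Lemma spectral_gap_near_contraction (L0 : X -> X) (u0 : X) (G0 : X -> Prop) (phi0 : X -> S)
  (a tau p : R) :
  (exists x y : X, forall a b, a *v x +v b *v y = 0v -> a = s0 /\ b = s0) ->
  is_bounded L0 -> simple_isolated_eigen L0 s1 u0 G0 -> eigenform L0 s1 u0 G0 phi0 ->
  0 < a < 1 -> (forall x, G0 x -> nrm (L0 x) <= (1 - a) * nrm x) ->
  is_opnorm (eig_proj phi0 u0) tau -> is_opnorm (eig_coproj phi0 u0) p ->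
  forall dl L c, 0 < dl < a -> is_bounded L -> is_opnorm (op_sub L L0) c ->
  6 * (tau * p * c) * (1 + (a - dl)) <= a * (a - dl) ->
  exists lam u G, simple_isolated_eigen L lam u G /\ spectral_gap L lam G dl 1.
Proof.
  intros Hdim [HL0 _] Hsimple Heigf Ha Hcontr Htau Hp dl L c Hdl [HL _] Hc Hsmall.
  destruct (eig_projection_norms_ge_1 L0 u0 G0 phi0 tau p Hdim Hsimple Heigf Htau Hp) as [Htau1 Hp1].
  destruct Hsimple as [Hu0 [HL0u [[HG0 _] _]]]. destruct Heigf as [Hphi [HphiL [Hker Hphiu]]].
  rewrite bscal_1 in HL0u.
  apply (small_perturbation_spectral_gap L0 L u0 G0 phi0 a dl tau p c); auto; try lra.
  - intros x. rewrite HphiL. ring.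
  - exact (opnorm_bound _ _ (eig_proj_linear _ u0 Hphi) Htau).
  - exact (opnorm_bound _ _ (eig_coproj_linear _ u0 Hphi) Hp).
  - exact (opnorm_bound _ _ (op_sub_linear _ _ HL HL0) Hc).
  - exact (opnorm_nonneg _ _ (op_sub_linear _ _ HL HL0) Hc).
  - apply budget_spec; assumption.
Qed.

Lemma spectral_gap_near_contraction_explicit (L0 : X -> X) (u0 : X) (G0 : X -> Prop)
  (phi0 : X -> S) (a tau p : R) :
  (exists x y : X, forall a b, a *v x +v b *v y = 0v -> a = s0 /\ b = s0) ->
  is_bounded L0 -> simple_isolated_eigen L0 s1 u0 G0 -> eigenform L0 s1 u0 G0 phi0 ->
  0 < a < 1 -> (forall x, G0 x -> nrm (L0 x) <= (1 - a) * nrm x) ->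
  is_opnorm (eig_proj phi0 u0) tau -> is_opnorm (eig_coproj phi0 u0) p ->
  (forall dl : R, 0 < dl < a ->
     forall L : X -> X, is_bounded L ->
     forall c : R, is_opnorm (op_sub L L0) c ->
     c <= a * (a - dl) / (6 * (1 + a - dl) * tau * p) ->
     exists (lam : S) (u : X) (G : X -> Prop),
       simple_isolated_eigen L lam u G /\ spectral_gap L lam G dl 1)
  /\
  (forall L : X -> X, is_bounded L ->
     forall c : R, is_opnorm (op_sub L L0) c ->
     c < a ^ 2 / (6 * (1 + a) * tau * p) ->
     exists dl : R, 0 < dl < 1 /\
     exists (lam : S) (u : X) (G : X -> Prop),
       simple_isolated_eigen L lam u G /\ spectral_gap L lam G dl 1).
Proof.
  intros Hdim HL0 Hsimple Heigf Ha Hcontr Htau Hp.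
  destruct (eig_projection_norms_ge_1 L0 u0 G0 phi0 tau p Hdim Hsimple Heigf Htau Hp) as [Htau1 Hp1].
  pose proof (spectral_gap_near_contraction L0 u0 G0 phi0 a tau p Hdim HL0 Hsimple Heigf Ha Hcontr
                Htau Hp) as Hgap.
  assert (Htp : 0 < 6 * tau * p) by nra.
  split.
  - intros dl Hdl L HL c Hc Hcb. apply (Hgap dl L c Hdl HL Hc).
    apply (Rmult_le_compat_r (6 * (1 + a - dl) * tau * p)) in Hcb; [|nra].
    replace (a * (a - dl) / (6 * (1 + a - dl) * tau * p) * (6 * (1 + a - dl) * tau * p))
      with (a * (a - dl)) in Hcb by (field; repeat split; lra).
    lra.
  - intros L HL c Hc Hcb.
    assert (Hc0 : 0 <= c) by (destruct HL as [HLl _]; destruct HL0 as [HL0l _];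
                              exact (opnorm_nonneg _ _ (op_sub_linear _ _ HLl HL0l) Hc)).
    apply (Rmult_lt_compat_r (6 * (1 + a) * tau * p)) in Hcb; [|nra].
    replace (a ^ 2 / (6 * (1 + a) * tau * p) * (6 * (1 + a) * tau * p)) with (a ^ 2) in Hcb
      by (field; repeat split; lra).
    destruct (exists_gap_size a (6 * (tau * p * c))) as [t [Ht Hmt]]; [lra | nra | nra|].
    exists (a - t). split; [lra|].
    apply (Hgap (a - t) L c); [lra | exact HL | exact Hc|].
    replace (a - (a - t)) with t by ring. exact Hmt.
Qed.

End ValuedField.

Lemma Rabs_eq0 (a : R) : Rabs a = 0 -> a = 0.
Proof.
  intros H. destruct (Req_dec a 0) as [Ha | Ha]; [exact Ha|].
  exfalso. exact (Rabs_no_R0 a Ha H).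
Qed.

Lemma Cmod_onto (r : R) : 0 <= r -> exists k : Complex.C, Complex.Cmod k = r.
Proof. intros H. exists (Complex.RtoC r). rewrite Complex.Cmod_R. apply Rabs_pos_eq, H. Qed.

Theorem corollaryD (F : ScalarField) (X : Banach (scalars_of F))
  (dim2 : exists x y : X, forall a b : sc_car (scalars_of F),
      badd (bscal a x) (bscal b y) = bzero X ->
      a = sc0 (scalars_of F) /\ b = sc0 (scalars_of F))
  (L0 : X -> X) (hL0 : is_bounded L0)
  (u0 : X) (G0 : X -> Prop) (phi0 : X -> sc_car (scalars_of F))
  (hsimple : simple_isolated_eigen L0 (sc1 (scalars_of F)) u0 G0)
  (hphi : eigenform L0 (sc1 (scalars_of F)) u0 G0 phi0)
  (hnorm : is_opnorm L0 1)
  (delta0 : R) (hd0 : 0 < delta0 < 1)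
  (hcontr : forall x, G0 x -> bnorm (L0 x) <= (1 - delta0) * bnorm x)
  (tau0 pinorm0 : R)
  (htau : is_opnorm (eig_proj phi0 u0) tau0)
  (hpi : is_opnorm (eig_coproj phi0 u0) pinorm0) :
  (forall delta : R, 0 < delta < delta0 ->
     forall L : X -> X, is_bounded L ->
     forall c : R, is_opnorm (op_sub L L0) c ->
     c <= delta0 * (delta0 - delta) / (6 * (1 + delta0 - delta) * tau0 * pinorm0) ->
     exists (lam : sc_car (scalars_of F)) (u : X) (G : X -> Prop),
       simple_isolated_eigen L lam u G /\ spectral_gap L lam G delta 1)
  /\
  (forall L : X -> X, is_bounded L ->
     forall c : R, is_opnorm (op_sub L L0) c ->
     c < delta0 ^ 2 / (6 * (1 + delta0) * tau0 * pinorm0) ->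
     exists delta : R, 0 < delta < 1 /\
     exists (lam : sc_car (scalars_of F)) (u : X) (G : X -> Prop),
       simple_isolated_eigen L lam u G /\ spectral_gap L lam G delta 1).
Proof.
  clear hnorm. destruct F.
  - exact (spectral_gap_near_contraction_explicit RScalars Rinv Rfield Rabs_mult Rabs_triang
      Rabs_Ropp Rabs_R0 Rabs_R1 Rabs_eq0 Rabs_pos (fun r H => ex_intro _ r (Rabs_pos_eq r H))
      X L0 u0 G0 phi0 delta0 tau0 pinorm0 dim2 hL0 hsimple hphi hd0 hcontr htau hpi).
  - exact (spectral_gap_near_contraction_explicit CScalars Complex.Cinv Complex.C_field_theory
      Complex.Cmod_mult Complex.Cmod_triangle Complex.Cmod_opp Complex.Cmod_0 Complex.Cmod_1
      Complex.Cmod_eq_0 Complex.Cmod_ge_0 Cmod_onto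
      X L0 u0 G0 phi0 delta0 tau0 pinorm0 dim2 hL0 hsimple hphi hd0 hcontr htau hpi).
Qed.
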